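(* Let $0<a<b<1$ with $a+b=1$, let $m\in C^1([0,1])$ be non-constant and $c\in C([0,1])$, and assume (H1), (H2) and $m\in S_{\mathcal{D}}$. Then $\lim_{s\to+\infty}\lambda(s)=\lambda^{\mathcal{D}}$.
   Context: Fix an integer $d\ge1$. $\lambda(s)$ denotes the principal eigenvalue of $-\varphi''-\frac{d-1}{r}\varphi'-2s\,m'(r)\varphi'+c(r)\varphi=\lambda\varphi$ on $(0,1)$, $\varphi'(0)=\varphi'(1)=0$; equivalently $\lambda(s)=\min\{\int_0^1 r^{d-1}e^{2sm}(|\varphi'|^2+c\varphi^2)dr:\ \varphi\in H^1((0,1)),\ \int_0^1 r^{d-1}e^{2sm}\varphi^2dr=1\}$. $\lambda^{\mathcal{D}}$ (resp. $\lambda^{\mathcal{N}}$) is the principal eigenvalue of $-\varphi''-\frac{d-1}{r}\varphi'+c\varphi=\lambda\varphi$ on $(a,b)$ with Dirichlet (resp. Neumann) boundary conditions, i.e. the minimum of $\int_a^b r^{d-1}(|\varphi'|^2+c\varphi^2)dr$ over $\varphi\in H^1_0((a,b))$ (resp. $H^1((a,b))$) with $\int_a^b r^{d-1}\varphi^2dr=1$. (H1): $m(r)=m(1-r)$ on $[0,1]$ and $m\equiv0$ on $[a,b]$, where $a+b=1$. (H2): $c>0$ on $[0,1]$ and $c(r)>\lambda^{\mathcal{D}}$ for $r\in[0,a]\cup[b,1]$. Step function $\tilde m$: given $\delta\in(0,a)$, constants $0<h<\alpha<\beta<1<\nu$ and $l\in\mathbb{N}$ with $\sum_{i\ge1}(\alpha^{i+l}+\beta^{i+l})=a-\delta$,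 put $x_0=\delta$, $x_n=\delta+\sum_{i=1}^n(\alpha^{i+l}+\beta^{i+l})$ ($n\ge1$), $y_n=x_n+\alpha^{n+l+1}$ ($n\ge0$); define $\tilde m(r)=-h^n$ on $[x_n,y_n)$ and $\tilde m(r)=\nu h^n$ on $[y_n,x_{n+1})$ for $n\ge0$ (so on $[\delta,a)$), and $\tilde m(r)=\tilde m(1-r)$ for $r\in[b,1-\delta]$. $S_{\mathcal{D}}$: the set of $m\in C^1([0,1])$ such that, for some such $\delta,h,\alpha,\beta,\nu,l$, $m'$ changes sign only finitely many times in $[0,\delta)\cup(1-\delta,1]$ and $m(r)\ge\tilde m(r)$ for all $r\in[\delta,a]\cup[b,1-\delta]$. *)

From Stdlib Require Import Reals Lra.
From Coquelicot Require Import Coquelicot.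
Open Scope R_scope.

(* f is C^1 : differentiable everywhere with continuous derivative.
   (Restrictions to [0,1] of such functions are exactly C^1([0,1]).) *)
Definition C1fun (f : R -> R) : Prop :=
  (forall x, ex_derive f x) /\ (forall x, continuous (Derive f) x).

(* lambda(s): inf of the weighted Rayleigh quotient over C^1 test functions
   (dense in H^1((0,1)), so the inf equals the min over H^1). *)
Definition lambda_s (d : nat) (m c : R -> R) (s : R) : R :=
  real (Glb_Rbar (fun q : R => exists phi : R -> R,
    C1fun phi /\
    RInt (fun r => r ^ (d - 1) * exp (2 * s * m r) * (phi r) ^ 2) 0 1 = 1 /\
    q = RInt (fun r => r ^ (d - 1) * exp (2 * s * m r) *
                       ((Derive phi r) ^ 2 + c r * (phi r) ^ 2)) 0 1)).

(* lambda^D on (a,b): inf over C^1 test functions vanishing at a and b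
   (dense in H^1_0((a,b))). *)
Definition lambda_D (d : nat) (c : R -> R) (a b : R) : R :=
  real (Glb_Rbar (fun q : R => exists phi : R -> R,
    C1fun phi /\ phi a = 0 /\ phi b = 0 /\
    RInt (fun r => r ^ (d - 1) * (phi r) ^ 2) a b = 1 /\
    q = RInt (fun r => r ^ (d - 1) * ((Derive phi r) ^ 2 + c r * (phi r) ^ 2)) a b)).

Definition lambda_N (d : nat) (c : R -> R) (a b : R) : R :=
  real (Glb_Rbar (fun q : R => exists phi : R -> R,
    C1fun phi /\
    RInt (fun r => r ^ (d - 1) * (phi r) ^ 2) a b = 1 /\
    q = RInt (fun r => r ^ (d - 1) * ((Derive phi r) ^ 2 + c r * (phi r) ^ 2)) a b)).

Definition H1 (m : R -> R) (a b : R) : Prop :=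
  (forall r, 0 <= r <= 1 -> m r = m (1 - r)) /\
  (forall r, a <= r <= b -> m r = 0).

Definition H2 (d : nat) (c : R -> R) (a b : R) : Prop :=
  (forall r, 0 <= r <= 1 -> 0 < c r) /\
  (forall r, (0 <= r <= a \/ b <= r <= 1) -> lambda_D d c a b < c r).

Definition finitely_many_sign_changes (f : R -> R) (u v : R) : Prop :=
  exists (n : nat) (p : nat -> R),
    p 0%nat = u /\ p n = v /\
    (forall i, (i < n)%nat -> p i < p (S i)) /\
    (forall i, (i < n)%nat ->
       (forall x, p i <= x <= p (S i) -> 0 <= f x) \/
       (forall x, p i <= x <= p (S i) -> f x <= 0)).

Fixpoint xs (delta alpha beta : R) (l n : nat) : R :=
  match n with
  | O => delta
  | S k => xs delta alpha beta l k + alpha ^ (S k + l) + beta ^ (S k + l)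
  end.

Definition ys (delta alpha beta : R) (l n : nat) : R :=
  xs delta alpha beta l n + alpha ^ (n + l + 1).

(* m >= m~ on [delta,a) and on (b,1-delta] (via m~(r) = m~(1-r)).
   m~ is -h^n on [x_n,y_n) and nu h^n on [y_n,x_{n+1}). *)
Definition above_mtilde (m : R -> R) (delta h alpha beta nu : R) (l : nat) : Prop :=
  forall (n : nat) (r : R),
    (xs delta alpha beta l n <= r < ys delta alpha beta l n ->
       - h ^ n <= m r /\ - h ^ n <= m (1 - r)) /\
    (ys delta alpha beta l n <= r < xs delta alpha beta l (S n) ->
       nu * h ^ n <= m r /\ nu * h ^ n <= m (1 - r)).

Definition in_SD (m : R -> R) (a b : R) : Prop :=
  exists (delta h alpha beta nu : R) (l : nat),
    0 < delta < a /\
    0 < h /\ h < alpha /\ alpha < beta /\ beta < 1 /\ 1 < nu /\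
    is_series (fun i : nat => alpha ^ (S i + l) + beta ^ (S i + l)) (a - delta) /\
    finitely_many_sign_changes (Derive m) 0 delta /\
    finitely_many_sign_changes (Derive m) (1 - delta) 1 /\
    above_mtilde m delta h alpha beta nu l.

From Stdlib Require Import Reals Lra Psatz Classical.
From Coquelicot Require Import Coquelicot.
Open Scope R_scope.

(* Upper bound: a Dirichlet test function on [a, b], flattened to zero near [a]
   and [b] and extended by zero, is admissible for every [s], and its quotient
   does not see the weight since [m = 0] on [a, b]; so [lambda s <= lambda^D + eps].

   Lower bound: split the energy of a normalized test function over [0, a],
   [a, b] and [b, 1].  On [a, b] the Dirichlet inequality holds up to a penalty
   [C (phi a^2 + phi b^2)] (subtract the affine interpolant of the boundary
   values).  On the ends [c >= lambda^D + mu], and for large [s] the weighted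
   energy on [delta, a] dominates [K phi(a)^2] for any prescribed [K]: at a
   level [n] tuned to [s], the step function [m~] gives either a heavy weight
   [exp (2 s nu h^n)] on the bump [y_n, x_(n+1)], or, by Cauchy-Schwarz against
   the weight [exp (- 2 s h^(n+1))] on [y_n, a], a large cost for [phi] to fall
   from [phi a].  The right end is the mirror image. *)


(* Coquelicot's generic lemmas, specialized to [R -> R] and stated with [Rplus]
   and [Rmult] so that they apply by unification. *)
Lemma continuous_mult_R (f g : R -> R) x :
  continuous f x -> continuous g x -> continuous (fun y => f y * g y) x.
Proof. exact (continuous_mult f g x). Qed.

Lemma continuous_plus_R (f g : R -> R) x :
  continuous f x -> continuous g x -> continuous (fun y => f y + g y) x.
Proof. exact (continuous_plus f g x). Qed.

Lemma continuous_opp_R (f : R -> R) x : continuous f x -> continuous (fun y => - f y) x.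
Proof. exact (continuous_opp f x). Qed.

Lemma continuous_minus_R (f g : R -> R) x :
  continuous f x -> continuous g x -> continuous (fun y => f y - g y) x.
Proof. intros; apply continuous_plus_R; [|apply continuous_opp_R]; assumption. Qed.

Lemma continuous_pow_R (f : R -> R) n x : continuous f x -> continuous (fun y => f y ^ n) x.
Proof.
  intros Hf; induction n as [|n IH]; simpl.
  - apply continuous_const.
  - now apply continuous_mult_R.
Qed.

Lemma continuous_div_R (f : R -> R) k x : continuous f x -> continuous (fun y => f y / k) x.
Proof. intros; apply continuous_mult_R; [assumption | apply continuous_const]. Qed.

Lemma is_derive_plus_R (f g : R -> R) x l1 l2 :
  is_derive f x l1 -> is_derive g x l2 -> is_derive (fun y => f y + g y) x (l1 + l2).
Proof. exact (is_derive_plus f g x l1 l2). Qed.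

Lemma is_derive_scal_R (f : R -> R) k x l :
  is_derive f x l -> is_derive (fun y => k * f y) x (k * l).
Proof. exact (is_derive_scal f x k l). Qed.

Ltac auto_cont := repeat match goal with
  | |- continuous (fun _ => ?c) _ => apply continuous_const
  | |- continuous (fun y => y) _ => apply continuous_id
  | |- continuous (fun y => @?f y * @?g y) _ => apply (continuous_mult_R f g)
  | |- continuous (fun y => @?f y + @?g y) _ => apply (continuous_plus_R f g)
  | |- continuous (fun y => @?f y - @?g y) _ => apply (continuous_minus_R f g)
  | |- continuous (fun y => - @?f y) _ => apply (continuous_opp_R f)
  | |- continuous (fun y => @?f y / ?k) _ => apply (continuous_div_R f k)
  | |- continuous (fun y => @?f y ^ ?n) _ => apply (continuous_pow_R f n)
  | |- continuous (fun y => exp (@?f y)) _ => apply (continuous_exp_comp f)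
  | |- continuous (fun y => Rabs (@?f y)) _ => apply (continuous_Rabs_comp f)
  | H : forall x, continuous ?f x |- continuous ?f _ => apply H
  | H : forall x, continuous ?f x |- continuous (fun y => ?f y) _ => apply H
  | H : forall x, continuous ?f x |- continuous (fun y => ?f (@?g y)) _ =>
      apply (continuous_comp g f); [| apply H]
  end.

(* Coquelicot states equations in the carrier of a normed module; [ring] and
   [field] need them at type [R]. *)
Ltac eq_in_R := match goal with |- @eq _ ?A ?B => change (@eq R A B) end.

Lemma ex_RInt_cont (f : R -> R) a b : (forall x, continuous f x) -> ex_RInt f a b.
Proof. intros Hf; apply (@ex_RInt_continuous R_CompleteNormedModule); intros; apply Hf. Qed.

Lemma RInt_plus_R (f g : R -> R) a b : ex_RInt f a b -> ex_RInt g a b ->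
  RInt (fun x => f x + g x) a b = RInt f a b + RInt g a b.
Proof. exact (RInt_plus f g a b). Qed.

Lemma RInt_scal_R (f : R -> R) a b k : ex_RInt f a b ->
  RInt (fun x => k * f x) a b = k * RInt f a b.
Proof. exact (RInt_scal f a b k). Qed.

Lemma RInt_lin_R (f g : R -> R) a b k l : ex_RInt f a b -> ex_RInt g a b ->
  RInt (fun x => k * f x + l * g x) a b = k * RInt f a b + l * RInt g a b.
Proof.
  intros Hf Hg; rewrite RInt_plus_R.
  - now rewrite !RInt_scal_R.
  - now apply (ex_RInt_scal f a b k).
  - now apply (ex_RInt_scal g a b l).
Qed.

Lemma RInt_Chasles_R (f : R -> R) a b c : (forall x, continuous f x) ->
  RInt f a b + RInt f b c = RInt f a c.
Proof. intros Hf; apply (RInt_Chasles f); now apply ex_RInt_cont. Qed.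

Lemma RInt_const_R (k a b : R) : RInt (fun _ => k) a b = (b - a) * k.
Proof. now rewrite RInt_const. Qed.

Lemma RInt_le_cont (f g : R -> R) a b : a <= b ->
  (forall x, continuous f x) -> (forall x, continuous g x) ->
  (forall x, a < x < b -> f x <= g x) -> RInt f a b <= RInt g a b.
Proof. intros; apply RInt_le; auto; now apply ex_RInt_cont. Qed.

Lemma RInt_ge_0_cont (f : R -> R) a b : a <= b -> (forall x, continuous f x) ->
  (forall x, a < x < b -> 0 <= f x) -> 0 <= RInt f a b.
Proof. intros; apply RInt_ge_0; auto; now apply ex_RInt_cont. Qed.

Lemma RInt_le_superinterval (f : R -> R) u p q v : (forall x, continuous f x) ->
  u <= p -> p <= q -> q <= v -> (forall x, u < x < v -> 0 <= f x) ->
  RInt f p q <= RInt f u v.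
Proof.
  intros Hf Hup Hpq Hqv Hpos.
  rewrite <- (RInt_Chasles_R f u p v), <- (RInt_Chasles_R f p q v) by assumption.
  assert (0 <= RInt f u p) by (apply RInt_ge_0_cont; auto; intros; apply Hpos; lra).
  assert (0 <= RInt f q v) by (apply RInt_ge_0_cont; auto; intros; apply Hpos; lra).
  lra.
Qed.

Lemma RInt_eq_0 (f : R -> R) u v : u <= v -> (forall x, u < x < v -> f x = 0) ->
  RInt f u v = 0.
Proof.
  intros Huv Hf; transitivity (RInt (fun _ => 0) u v).
  - apply RInt_ext; intros x Hx; rewrite Rmin_left, Rmax_right in Hx by assumption; auto.
  - rewrite RInt_const_R; eq_in_R; ring.
Qed.

Lemma RInt_reflect (f : R -> R) p q : (forall x, continuous f x) ->
  RInt f (1 - q) (1 - p) = RInt (fun t => f (1 - t)) p q.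
Proof.
  intros Hf.
  pose proof (RInt_comp_lin f (-1) 1 p q (ex_RInt_cont _ _ _ Hf)) as Hlin.
  replace (-1 * p + 1) with (1 - p) in Hlin by ring.
  replace (-1 * q + 1) with (1 - q) in Hlin by ring.
  rewrite <- (opp_RInt_swap f (1 - p) (1 - q)) by now apply ex_RInt_cont.
  rewrite <- Hlin, (RInt_ext _ (fun y => -1 * f (1 - y))).
  - rewrite RInt_scal_R; [unfold opp; simpl; ring|].
    apply ex_RInt_cont; intros; auto_cont.
  - intros x _; unfold scal; simpl; unfold mult; simpl.
    now replace (-1 * x + 1) with (1 - x) by ring.
Qed.

Lemma real_Glb_Rbar_le (E : R -> Prop) x : (exists L, forall y, E y -> L <= y) -> E x ->
  real (Glb_Rbar E) <= x.
Proof.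
  intros [L HL] Hx; destruct (Glb_Rbar_correct E) as [Hlb Hglb].
  specialize (Hlb x Hx).
  assert (HL' : is_lb_Rbar E L) by (intros y Hy; apply (HL y Hy)).
  specialize (Hglb _ HL').
  destruct (Glb_Rbar E); simpl in *; [exact Hlb | contradiction | contradiction].
Qed.

Lemma real_Glb_Rbar_ge (E : R -> Prop) L : (exists x, E x) -> (forall y, E y -> L <= y) ->
  L <= real (Glb_Rbar E).
Proof.
  intros [x Hx] HL; destruct (Glb_Rbar_correct E) as [Hlb Hglb].
  assert (HL' : is_lb_Rbar E L) by (intros y Hy; apply (HL y Hy)).
  specialize (Hglb _ HL'); specialize (Hlb x Hx).
  destruct (Glb_Rbar E); simpl in *; [exact Hglb | contradiction | contradiction].
Qed.

Lemma real_Glb_Rbar_approx (E : R -> Prop) eps : (exists x, E x) -> 0 < eps ->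
  exists x, E x /\ x <= real (Glb_Rbar E) + eps.
Proof.
  intros Hne Heps; apply NNPP; intros Hnone.
  assert (Hlb : real (Glb_Rbar E) + eps <= real (Glb_Rbar E)).
  { apply real_Glb_Rbar_ge; [assumption|].
    intros y Hy; apply Rnot_lt_le; intros Hlt; apply Hnone; exists y; split; [assumption | lra]. }
  lra.
Qed.

Lemma C1fun_intro (f g : R -> R) : (forall x, is_derive f x (g x)) ->
  (forall x, continuous g x) -> C1fun f /\ (forall x, Derive f x = g x).
Proof.
  intros Hd Hg.
  assert (HD : forall x, Derive f x = g x) by (intros; now apply is_derive_unique).
  split; [split|exact HD].
  - intros x; eexists; apply Hd.
  - intros x; apply (continuous_ext g); [intros; now rewrite HD | apply Hg].
Qed.

Lemma C1fun_continuous f : C1fun f -> forall x, continuous f x.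
Proof. intros [Hd _] x; now apply (@ex_derive_continuous R_AbsRing R_NormedModule). Qed.

Lemma C1fun_Derive_continuous f : C1fun f -> forall x, continuous (Derive f) x.
Proof. now intros [_ Hc]. Qed.

Lemma C1fun_is_derive f : C1fun f -> forall x, is_derive f x (Derive f x).
Proof. intros [Hd _] x; now apply Derive_correct. Qed.

Lemma C1fun_const (k : R) : C1fun (fun _ => k).
Proof.
  apply (C1fun_intro _ (fun _ => 0)); intros; [auto_derive; auto | apply continuous_const].
Qed.

Lemma C1fun_lin_comb (f g : R -> R) (k : R) : C1fun f -> C1fun g ->
  C1fun (fun x => f x + k * g x) /\
  (forall x, Derive (fun x => f x + k * g x) x = Derive f x + k * Derive g x).
Proof.
  intros Hf Hg; apply C1fun_intro.
  - intros x; apply is_derive_plus_R; [|apply is_derive_scal_R]; now apply C1fun_is_derive.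
  - pose proof (C1fun_Derive_continuous _ Hf); pose proof (C1fun_Derive_continuous _ Hg).
    intros; auto_cont.
Qed.

Lemma C1fun_scal (f : R -> R) (k : R) : C1fun f ->
  C1fun (fun x => k * f x) /\ (forall x, Derive (fun x => k * f x) x = k * Derive f x).
Proof.
  intros Hf; apply C1fun_intro.
  - intros x; apply is_derive_scal_R; now apply C1fun_is_derive.
  - pose proof (C1fun_Derive_continuous _ Hf); intros; auto_cont.
Qed.

Lemma C1fun_reflect (f : R -> R) : C1fun f ->
  C1fun (fun t => f (1 - t)) /\ (forall t, Derive (fun t => f (1 - t)) t = - Derive f (1 - t)).
Proof.
  intros Hf; apply C1fun_intro.
  - intros x; replace (- Derive f (1 - x)) with (scal (-1) (Derive f (1 - x)))
      by (unfold scal; simpl; unfold mult; simpl; ring).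
    apply (is_derive_comp f (fun t => 1 - t)); [now apply C1fun_is_derive|].
    auto_derive; auto; ring.
  - pose proof (C1fun_Derive_continuous _ Hf); intros; auto_cont.
Qed.

Lemma C1fun_local (f : R -> R) :
  (forall x, exists g, C1fun g /\ locally x (fun y => f y = g y)) -> C1fun f.
Proof.
  intros Hloc; split.
  - intros x; destruct (Hloc x) as [g [Hg Hfg]]; exists (Derive g x).
    apply (is_derive_ext_loc g); [|now apply C1fun_is_derive].
    eapply filter_imp; [|exact Hfg]; intros; auto.
  - intros x; destruct (Hloc x) as [g [Hg Hfg]].
    apply (continuous_ext_loc _ (Derive g)); [|now apply C1fun_Derive_continuous].
    apply locally_locally in Hfg; eapply filter_imp; [|exact Hfg].
    intros y Hy; symmetry; now apply Derive_ext_loc.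
Qed.

(** * A C^1 dead zone *)

Definition pos_part (x : R) : R := (x + Rabs x) / 2.

Definition pos_part_sq (x : R) : R := pos_part x ^ 2.

Lemma continuous_pos_part x : continuous pos_part x.
Proof. unfold pos_part; auto_cont. Qed.

Lemma pos_part_of_nonpos x : x <= 0 -> pos_part x = 0.
Proof. intros; unfold pos_part; rewrite Rabs_left1; lra. Qed.

Lemma pos_part_of_nonneg x : 0 <= x -> pos_part x = x.
Proof. intros; unfold pos_part; rewrite Rabs_pos_eq; lra. Qed.

Lemma is_derive_pos_part_sq x : is_derive pos_part_sq x (2 * pos_part x).
Proof.
  apply is_derive_Reals; intros eps Heps; exists (mkposreal eps Heps); intros h Hh0 Hh; simpl in Hh.
  assert (Hrem : Rabs (pos_part_sq (x + h) - pos_part_sq x - 2 * pos_part x * h) <= h ^ 2).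
  { unfold pos_part_sq, pos_part; apply Rabs_le.
    unfold Rabs; destruct (Rcase_abs x), (Rcase_abs (x + h)); split; nra. }
  replace ((pos_part_sq (x + h) - pos_part_sq x) / h - 2 * pos_part x)
    with ((pos_part_sq (x + h) - pos_part_sq x - 2 * pos_part x * h) / h) by (field; auto).
  assert (Hh' : 0 < Rabs h) by now apply Rabs_pos_lt.
  rewrite Rabs_div by assumption; apply Rle_lt_trans with (Rabs h); [|assumption].
  apply Rmult_le_reg_r with (Rabs h); [assumption|].
  unfold Rdiv; rewrite Rmult_assoc, Rinv_l, Rmult_1_r by lra.
  replace (Rabs h * Rabs h) with (h ^ 2); [assumption|].
  rewrite <- Rabs_mult, Rabs_pos_eq; nra.
Qed.

Lemma Derive_pos_part_sq x : Derive pos_part_sq x = 2 * pos_part x.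
Proof. apply is_derive_unique, is_derive_pos_part_sq. Qed.

Lemma ex_derive_pos_part_sq x : ex_derive pos_part_sq x.
Proof. eexists; apply is_derive_pos_part_sq. Qed.

(* The odd primitive of the ramp [dead_zone_slope] (0 on [0, e], linear on
   [e, 2 e], 1 beyond): it vanishes on [-e, e] and moves [t] by at most [2 e]. *)
Definition dead_zone (e t : R) : R :=
  (pos_part_sq (t - e) - pos_part_sq (t - 2 * e)
   - pos_part_sq (- t - e) + pos_part_sq (- t - 2 * e)) / (2 * e).

Definition dead_zone_slope (e t : R) : R :=
  (pos_part (t - e) - pos_part (t - 2 * e)) / e
  + (pos_part (- t - e) - pos_part (- t - 2 * e)) / e.

Lemma is_derive_dead_zone e t : 0 < e -> is_derive (dead_zone e) t (dead_zone_slope e t).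
Proof.
  intros He; unfold dead_zone; auto_derive.
  - repeat split; apply ex_derive_pos_part_sq.
  - rewrite !Derive_pos_part_sq; unfold dead_zone_slope, Rminus; eq_in_R; field; lra.
Qed.

Lemma continuous_dead_zone_slope e t : continuous (dead_zone_slope e) t.
Proof. pose proof continuous_pos_part; unfold dead_zone_slope; auto_cont. Qed.

Lemma C1fun_dead_zone_comp (e : R) (phi : R -> R) : 0 < e -> C1fun phi ->
  C1fun (fun y => dead_zone e (phi y)) /\
  (forall x, Derive (fun y => dead_zone e (phi y)) x = dead_zone_slope e (phi x) * Derive phi x).
Proof.
  intros He Hphi; apply C1fun_intro.
  - intros x; replace (dead_zone_slope e (phi x) * Derive phi x)
      with (scal (Derive phi x) (dead_zone_slope e (phi x)))
      by (unfold scal; simpl; unfold mult; simpl; ring).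
    apply (is_derive_comp (dead_zone e) phi); [now apply is_derive_dead_zone|].
    now apply C1fun_is_derive.
  - pose proof (C1fun_continuous _ Hphi); pose proof (C1fun_Derive_continuous _ Hphi).
    pose proof (continuous_dead_zone_slope e); intros; auto_cont.
Qed.

Lemma dead_zone_nonneg_cases e t : 0 < e -> 0 <= t ->
  (t <= e /\ dead_zone e t = 0 /\ dead_zone_slope e t = 0) \/
  (e <= t <= 2 * e /\ dead_zone e t = (t - e) ^ 2 / (2 * e) /\ dead_zone_slope e t = (t - e) / e) \/
  (2 * e <= t /\ dead_zone e t = t - 3 * e / 2 /\ dead_zone_slope e t = 1).
Proof.
  intros He Ht; unfold dead_zone, dead_zone_slope, pos_part_sq.
  rewrite (pos_part_of_nonpos (- t - e)), (pos_part_of_nonpos (- t - 2 * e)) by lra.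
  destruct (Rle_dec t e) as [Hte|Hte]; [|destruct (Rle_dec t (2 * e)) as [Ht2e|Ht2e]].
  - left; rewrite (pos_part_of_nonpos (t - e)), (pos_part_of_nonpos (t - 2 * e)) by lra.
    split; [lra | split; field; lra].
  - right; left; rewrite (pos_part_of_nonneg (t - e)), (pos_part_of_nonpos (t - 2 * e)) by lra.
    split; [lra | split; field; lra].
  - right; right; rewrite (pos_part_of_nonneg (t - e)), (pos_part_of_nonneg (t - 2 * e)) by lra.
    split; [lra | split; field; lra].
Qed.

Lemma dead_zone_odd e t : dead_zone e (- t) = - dead_zone e t.
Proof. unfold dead_zone; replace (- - t) with t by ring; unfold Rdiv; ring. Qed.

Lemma dead_zone_slope_even e t : dead_zone_slope e (- t) = dead_zone_slope e t.
Proof. unfold dead_zone_slope; replace (- - t) with t by ring; ring. Qed.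

Lemma dead_zone_nonneg_bounds e t : 0 < e -> 0 <= t ->
  0 <= dead_zone e t <= t /\ t - 2 * e <= dead_zone e t /\ 0 <= dead_zone_slope e t <= 1 /\
  (t <= e -> dead_zone e t = 0).
Proof.
  intros He Ht.
  destruct (dead_zone_nonneg_cases e t He Ht)
    as [[H1 [-> ->]] | [[[H1 H1'] [-> ->]] | [H1 [-> ->]]]].
  - repeat split; lra.
  - assert (Hq : 0 <= (t - e) / e <= 1).
    { split; [apply Rdiv_le_0_compat; lra|].
      apply Rmult_le_reg_r with e; [lra|]; unfold Rdiv; rewrite Rmult_assoc, Rinv_l; lra. }
    replace ((t - e) ^ 2 / (2 * e)) with ((t - e) * ((t - e) / e) / 2) by (field; lra).
    repeat split; nra.
  - repeat split; lra.
Qed.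

Lemma dead_zone_bounds e t : 0 < e ->
  0 <= dead_zone_slope e t <= 1 /\ dead_zone e t ^ 2 <= t ^ 2 /\
  (1 - 2 * e) * t ^ 2 - 2 * e <= dead_zone e t ^ 2 /\ (Rabs t <= e -> dead_zone e t = 0).
Proof.
  intros He.
  assert (Hpos : forall t, 0 <= t ->
    0 <= dead_zone_slope e t <= 1 /\ dead_zone e t ^ 2 <= t ^ 2 /\
    (1 - 2 * e) * t ^ 2 - 2 * e <= dead_zone e t ^ 2 /\ (Rabs t <= e -> dead_zone e t = 0)).
  { intros u Hu; destruct (dead_zone_nonneg_bounds e u He Hu) as [HF [HFlow [HF' Hsmall]]].
    repeat split; try apply HF'; [nra | |].
    - assert (0 <= e * (u - 1) ^ 2) by (apply Rmult_le_pos; [lra | apply pow2_ge_0]).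
      destruct (Rle_dec (2 * e) u); [|nra].
      assert ((u - 2 * e) ^ 2 <= dead_zone e u ^ 2) by (apply pow_incr; lra); nra.
    - rewrite Rabs_pos_eq by assumption; assumption. }
  destruct (Rle_dec 0 t) as [Ht|Ht]; [now apply Hpos|].
  destruct (Hpos (- t)) as [H1 [H2 [H3 H4]]]; [lra|].
  rewrite dead_zone_odd, dead_zone_slope_even, Rabs_Ropp in *.
  repeat split; try apply H1; nra.
Qed.

(** * Weighted energies and the Dirichlet eigenvalue *)

Definition energy (W c phi : R -> R) (u v : R) : R :=
  RInt (fun r => W r * (Derive phi r ^ 2 + c r * phi r ^ 2)) u v.

Definition mass (W phi : R -> R) (u v : R) : R := RInt (fun r => W r * phi r ^ 2) u v.

Lemma peter_paul (x y t : R) : 0 < t < 1 -> (1 - t) * x ^ 2 + (1 - / t) * y ^ 2 <= (x + y) ^ 2.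
Proof.
  intros Ht.
  assert (Hsq : (x + y) ^ 2 - ((1 - t) * x ^ 2 + (1 - / t) * y ^ 2) = / t * (t * x + y) ^ 2)
    by (field; lra).
  assert (0 <= / t * (t * x + y) ^ 2).
  { apply Rmult_le_pos; [apply Rlt_le, Rinv_0_lt_compat; lra | apply pow2_ge_0]. }
  lra.
Qed.

Section QuadraticForms.

Variables (W c : R -> R) (u v : R).
Hypothesis W_cont : forall x, continuous W x.
Hypothesis c_cont : forall x, continuous c x.

Lemma energy_scal (phi : R -> R) (k : R) : C1fun phi ->
  energy W c (fun x => k * phi x) u v = k ^ 2 * energy W c phi u v.
Proof.
  intros Hphi; destruct (C1fun_scal phi k Hphi) as [_ Hd].
  pose proof (C1fun_continuous _ Hphi); pose proof (C1fun_Derive_continuous _ Hphi).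
  unfold energy; rewrite <- RInt_scal_R by (apply ex_RInt_cont; intros; auto_cont).
  apply RInt_ext; intros x _; rewrite Hd; eq_in_R; ring.
Qed.

Lemma mass_scal (phi : R -> R) (k : R) : C1fun phi ->
  mass W (fun x => k * phi x) u v = k ^ 2 * mass W phi u v.
Proof.
  intros Hphi; pose proof (C1fun_continuous _ Hphi).
  unfold mass; rewrite <- RInt_scal_R by (apply ex_RInt_cont; intros; auto_cont).
  apply RInt_ext; intros x _; eq_in_R; ring.
Qed.

Lemma normalize_mass (psi : R -> R) : C1fun psi -> 0 < mass W psi u v ->
  let phi := fun x => / sqrt (mass W psi u v) * psi x in
  C1fun phi /\ mass W phi u v = 1 /\ energy W c phi u v = energy W c psi u v / mass W psi u v.
Proof.
  intros Hpsi HN phi.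
  assert (Hk : (/ sqrt (mass W psi u v)) ^ 2 = / mass W psi u v).
  { rewrite pow_inv, pow2_sqrt; [reflexivity | lra]. }
  split; [apply C1fun_scal, Hpsi|]; unfold phi.
  rewrite mass_scal, energy_scal, Hk by assumption.
  split; field; lra.
Qed.

Hypothesis u_le_v : u <= v.
Hypothesis W_nonneg : forall x, u < x < v -> 0 <= W x.
Hypothesis c_nonneg : forall x, u < x < v -> 0 <= c x.

Lemma energy_nonneg (phi : R -> R) : C1fun phi -> 0 <= energy W c phi u v.
Proof.
  intros Hphi; pose proof (C1fun_continuous _ Hphi); pose proof (C1fun_Derive_continuous _ Hphi).
  apply RInt_ge_0_cont; [assumption | intros; auto_cont |].
  intros x Hx; apply Rmult_le_pos; [now apply W_nonneg|].
  pose proof (pow2_ge_0 (Derive phi x)); pose proof (pow2_ge_0 (phi x)).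
  pose proof (c_nonneg x Hx); nra.
Qed.

Lemma mass_nonneg (phi : R -> R) : C1fun phi -> 0 <= mass W phi u v.
Proof.
  intros Hphi; pose proof (C1fun_continuous _ Hphi).
  apply RInt_ge_0_cont; [assumption | intros; auto_cont |].
  intros x Hx; apply Rmult_le_pos; [now apply W_nonneg | apply pow2_ge_0].
Qed.

Section Perturbation.

Variables (phi chi psi : R -> R) (k t : R).
Hypotheses (phi_C1 : C1fun phi) (chi_C1 : C1fun chi).
Hypothesis psi_def : forall x, psi x = phi x + k * chi x.
Hypothesis t_range : 0 < t < 1.

Lemma mass_perturb_ge :
  (1 - t) * mass W phi u v + (1 - / t) * k ^ 2 * mass W chi u v <= mass W psi u v.
Proof.
  pose proof (C1fun_continuous _ phi_C1); pose proof (C1fun_continuous _ chi_C1).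
  assert (Hpsi : forall x, continuous psi x).
  { intros x; apply (continuous_ext (fun x => phi x + k * chi x)); [intros; auto | auto_cont]. }
  unfold mass; rewrite <- (RInt_scal_R _ _ _ (1 - t)), <- RInt_scal_R, <- RInt_plus_R;
    try (apply ex_RInt_cont; intros; auto_cont).
  apply RInt_le_cont; [assumption | intros; auto_cont | intros; auto_cont |].
  intros x Hx; rewrite psi_def.
  pose proof (peter_paul (phi x) (k * chi x) t t_range) as Hpp.
  apply Rmult_le_compat_l with (r := W x) in Hpp; [|now apply W_nonneg].
  eapply Rle_trans; [|exact Hpp]; right; ring.
Qed.

Lemma energy_perturb_ge :
  (1 - t) * energy W c phi u v + (1 - / t) * k ^ 2 * energy W c chi u v <= energy W c psi u v.
Proof.
  pose proof (C1fun_continuous _ phi_C1); pose proof (C1fun_continuous _ chi_C1).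
  pose proof (C1fun_Derive_continuous _ phi_C1); pose proof (C1fun_Derive_continuous _ chi_C1).
  destruct (C1fun_lin_comb phi chi k phi_C1 chi_C1) as [_ Hd].
  assert (HDpsi : forall x, Derive psi x = Derive phi x + k * Derive chi x).
  { intros x; rewrite <- Hd; now apply Derive_ext. }
  assert (Hpsic : forall x, continuous psi x).
  { intros x; apply (continuous_ext (fun x => phi x + k * chi x)); [intros; auto | auto_cont]. }
  assert (Hpsid : forall x, continuous (Derive psi) x).
  { intros x; apply (continuous_ext (fun x => Derive phi x + k * Derive chi x));
      [intros; auto | auto_cont]. }
  unfold energy; rewrite <- (RInt_scal_R _ _ _ (1 - t)), <- RInt_scal_R, <- RInt_plus_R;
    try (apply ex_RInt_cont; intros; auto_cont).
  apply RInt_le_cont; [assumption | intros; auto_cont | intros; auto_cont |].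
  intros x Hx; rewrite psi_def, HDpsi.
  pose proof (peter_paul (Derive phi x) (k * Derive chi x) t t_range) as Hd'.
  pose proof (peter_paul (phi x) (k * chi x) t t_range) as Hv.
  apply Rmult_le_compat_l with (r := c x) in Hv; [|now apply c_nonneg].
  pose proof (Rplus_le_compat _ _ _ _ Hd' Hv) as Hsum.
  apply Rmult_le_compat_l with (r := W x) in Hsum; [|now apply W_nonneg].
  eapply Rle_trans; [|exact Hsum]; right; ring.
Qed.

End Perturbation.

End QuadraticForms.

Definition rad_weight (d : nat) (r : R) : R := r ^ (d - 1).

Definition exp_weight (d : nat) (m : R -> R) (s r : R) : R := r ^ (d - 1) * exp (2 * s * m r).

Definition dirichlet_values (d : nat) (c : R -> R) (a b q : R) : Prop :=
  exists phi, C1fun phi /\ phi a = 0 /\ phi b = 0 /\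
    mass (rad_weight d) phi a b = 1 /\ q = energy (rad_weight d) c phi a b.

Definition weighted_values (d : nat) (m c : R -> R) (s q : R) : Prop :=
  exists phi, C1fun phi /\
    mass (exp_weight d m s) phi 0 1 = 1 /\ q = energy (exp_weight d m s) c phi 0 1.

Lemma lambda_D_glb d c a b : lambda_D d c a b = real (Glb_Rbar (dirichlet_values d c a b)).
Proof. reflexivity. Qed.

Lemma lambda_s_glb d m c s : lambda_s d m c s = real (Glb_Rbar (weighted_values d m c s)).
Proof. reflexivity. Qed.

Lemma continuous_rad_weight d x : continuous (rad_weight d) x.
Proof. unfold rad_weight; auto_cont. Qed.

Lemma continuous_exp_weight d m s : (forall x, continuous m x) ->
  forall x, continuous (exp_weight d m s) x.
Proof. intros; unfold exp_weight; auto_cont. Qed.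

Section DirichletEigenvalue.

Variables (d : nat) (c : R -> R) (a b : R).
Hypotheses (a_pos : 0 < a) (a_lt_b : a < b).
Hypothesis c_cont : forall x, continuous c x.
Hypothesis c_nonneg : forall x, a < x < b -> 0 <= c x.

Let W := rad_weight d.

Let W_nonneg x : a < x < b -> 0 <= W x.
Proof. intros; apply pow_le; lra. Qed.

Let W_energy_nonneg phi : C1fun phi -> 0 <= energy W c phi a b.
Proof.
  apply energy_nonneg;
    [apply continuous_rad_weight | exact c_cont | lra | exact W_nonneg | exact c_nonneg].
Qed.

Let W_mass_nonneg phi : C1fun phi -> 0 <= mass W phi a b.
Proof. apply mass_nonneg; [apply continuous_rad_weight | lra | exact W_nonneg]. Qed.

Lemma dirichlet_values_nonneg q : dirichlet_values d c a b q -> 0 <= q.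
Proof. intros [phi [Hphi [_ [_ [_ ->]]]]]; now apply W_energy_nonneg. Qed.

Lemma dirichlet_values_inhabited : exists q, dirichlet_values d c a b q.
Proof.
  set (bump := fun r => (r - a) * (b - r)).
  assert (Hbump : C1fun bump).
  { apply (C1fun_intro _ (fun r => (b - r) - (r - a))); intros; [|auto_cont].
    unfold bump; auto_derive; auto; ring. }
  assert (Hmass : 0 < mass W bump a b).
  { apply RInt_gt_0; [assumption | | intros; unfold W, rad_weight, bump; auto_cont].
    intros x Hx; apply Rmult_lt_0_compat; [apply pow_lt; lra|].
    apply pow_lt, Rmult_lt_0_compat; lra. }
  destruct (normalize_mass W c a b (continuous_rad_weight d) c_cont bump Hbump Hmass)
    as [Hphi [Hm _]].
  eexists; exists (fun x => / sqrt (mass W bump a b) * bump x).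
  split; [exact Hphi|]; split; [unfold bump; ring|]; split; [unfold bump; ring|].
  split; [exact Hm | reflexivity].
Qed.

Lemma lambda_D_nonneg : 0 <= lambda_D d c a b.
Proof.
  rewrite lambda_D_glb; apply real_Glb_Rbar_ge;
    [apply dirichlet_values_inhabited | apply dirichlet_values_nonneg].
Qed.

Lemma lambda_D_rayleigh (psi : R -> R) : C1fun psi -> psi a = 0 -> psi b = 0 ->
  lambda_D d c a b * mass W psi a b <= energy W c psi a b.
Proof.
  intros Hpsi Ha Hb.
  pose proof (W_mass_nonneg psi Hpsi) as HN.
  destruct (Req_dec (mass W psi a b) 0) as [HN0|HN0].
  { rewrite HN0, Rmult_0_r; now apply W_energy_nonneg. }
  destruct (normalize_mass W c a b (continuous_rad_weight d) c_cont psi Hpsi ltac:(lra))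
    as [Hphi [Hm He]].
  assert (Hle : lambda_D d c a b <= energy W c psi a b / mass W psi a b).
  { rewrite lambda_D_glb, <- He; apply real_Glb_Rbar_le.
    - exists 0; apply dirichlet_values_nonneg.
    - eexists; split; [exact Hphi|].
      split; [rewrite Ha; ring|]; split; [rewrite Hb; ring|]; split; [exact Hm | reflexivity]. }
  apply Rmult_le_compat_r with (r := mass W psi a b) in Hle; [|assumption].
  replace (energy W c psi a b / mass W psi a b * mass W psi a b) with (energy W c psi a b) in Hle
    by (field; lra).
  exact Hle.
Qed.

End DirichletEigenvalue.

Definition affine_interp (a b A B r : R) : R := A + (B - A) * ((r - a) / (b - a)).

Section BoundaryPenalty.

Variables (W c : R -> R) (a b lam : R).
Hypothesis W_cont : forall x, continuous W x.
Hypothesis c_cont : forall x, continuous c x.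
Hypothesis a_lt_b : a < b.
Hypothesis W_nonneg : forall x, a < x < b -> 0 <= W x.
Hypothesis c_nonneg : forall x, a < x < b -> 0 <= c x.
Hypothesis lam_nonneg : 0 <= lam.
Hypothesis rayleigh : forall psi, C1fun psi -> psi a = 0 -> psi b = 0 ->
  lam * mass W psi a b <= energy W c psi a b.

Lemma C1fun_affine_interp A B :
  C1fun (affine_interp a b A B) /\ (forall r, Derive (affine_interp a b A B) r = (B - A) / (b - a)).
Proof.
  apply C1fun_intro; intros; [|apply continuous_const].
  unfold affine_interp; auto_derive; [lra | field; lra].
Qed.

Lemma affine_interp_sq_le A B r : a <= r <= b -> affine_interp a b A B r ^ 2 <= A ^ 2 + B ^ 2.
Proof.
  intros Hr; unfold affine_interp.
  assert (Ht : 0 <= (r - a) / (b - a) <= 1).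
  { split; [apply Rdiv_le_0_compat; lra|].
    apply Rmult_le_reg_r with (b - a); [lra|]; unfold Rdiv; rewrite Rmult_assoc, Rinv_l; lra. }
  set (t := (r - a) / (b - a)) in *.
  assert (0 <= t * (1 - t) * (A - B) ^ 2) by (apply Rmult_le_pos; [nra | apply pow2_ge_0]).
  nra.
Qed.

Lemma mass_affine_interp_le A B :
  mass W (affine_interp a b A B) a b <= (A ^ 2 + B ^ 2) * RInt W a b.
Proof.
  destruct (C1fun_affine_interp A B) as [Hchi _]; pose proof (C1fun_continuous _ Hchi).
  unfold mass; rewrite <- RInt_scal_R by now apply ex_RInt_cont.
  apply RInt_le_cont; [lra | intros; auto_cont | intros; auto_cont |].
  intros r Hr; rewrite Rmult_comm; apply Rmult_le_compat_r; [now apply W_nonneg|].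
  apply affine_interp_sq_le; lra.
Qed.

Lemma energy_affine_interp_le A B :
  energy W c (affine_interp a b A B) a b <=
  (A ^ 2 + B ^ 2) * RInt (fun r => W r * (2 / (b - a) ^ 2 + c r)) a b.
Proof.
  destruct (C1fun_affine_interp A B) as [Hchi Hd]; pose proof (C1fun_continuous _ Hchi).
  pose proof (C1fun_Derive_continuous _ Hchi).
  unfold energy; rewrite <- RInt_scal_R by (apply ex_RInt_cont; intros; auto_cont).
  apply RInt_le_cont; [lra | intros; auto_cont | intros; auto_cont |].
  intros r Hr; rewrite Hd.
  assert (Hslope : ((B - A) / (b - a)) ^ 2 <= (A ^ 2 + B ^ 2) * (2 / (b - a) ^ 2)).
  { replace (((B - A) / (b - a)) ^ 2) with ((B - A) ^ 2 * / (b - a) ^ 2) by (field; lra).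
    replace ((A ^ 2 + B ^ 2) * (2 / (b - a) ^ 2)) with (2 * (A ^ 2 + B ^ 2) * / (b - a) ^ 2)
      by (field; lra).
    apply Rmult_le_compat_r; [apply Rlt_le, Rinv_0_lt_compat, pow_lt; lra|].
    pose proof (pow2_ge_0 (A + B)); nra. }
  pose proof (affine_interp_sq_le A B r ltac:(lra)).
  pose proof (W_nonneg r Hr); pose proof (c_nonneg r Hr).
  replace ((A ^ 2 + B ^ 2) * (W r * (2 / (b - a) ^ 2 + c r)))
    with (W r * ((A ^ 2 + B ^ 2) * (2 / (b - a) ^ 2) + c r * (A ^ 2 + B ^ 2))) by ring.
  apply Rmult_le_compat_l; [assumption|].
  apply Rplus_le_compat; [assumption | now apply Rmult_le_compat_l].
Qed.

(* [phi - chi] vanishes at both ends, so [rayleigh] applies to it; the cross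
   terms are absorbed by the Peter-Paul inequality with parameter [t]. *)
Lemma energy_ge_rayleigh_perturbed (phi chi : R -> R) (t : R) : C1fun phi -> C1fun chi ->
  chi a = phi a -> chi b = phi b -> 0 < t < 1 ->
  (1 - t) ^ 2 * lam * mass W phi a b - (/ t - 1) * (lam * mass W chi a b + energy W c chi a b)
  <= energy W c phi a b.
Proof.
  intros Hphi Hchi Ha Hb Ht.
  set (psi := fun r => phi r + -1 * chi r).
  destruct (C1fun_lin_comb phi chi (-1) Hphi Hchi) as [Hpsi _]; fold psi in Hpsi.
  pose proof (rayleigh psi Hpsi ltac:(unfold psi; rewrite Ha; ring)
    ltac:(unfold psi; rewrite Hb; ring)) as Hray.
  pose proof (energy_perturb_ge W c a b W_cont c_cont ltac:(lra) W_nonneg c_nonneg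
    psi chi phi 1 t Hpsi Hchi ltac:(intros; unfold psi; ring) Ht) as Henergy.
  pose proof (mass_perturb_ge W a b W_cont ltac:(lra) W_nonneg
    phi chi psi (-1) t Hphi Hchi ltac:(intros; reflexivity) Ht) as Hmass.
  pose proof (mass_nonneg W a b W_cont ltac:(lra) W_nonneg chi Hchi).
  pose proof (energy_nonneg W c a b W_cont c_cont ltac:(lra) W_nonneg c_nonneg chi Hchi).
  assert (Hk : 1 <= / t) by (rewrite <- Rinv_1; apply Rinv_le_contravar; lra).
  assert (Hpsi_mass : (1 - t) * mass W phi a b - (/ t - 1) * mass W chi a b <= mass W psi a b)
    by nra.
  apply Rmult_le_compat_l with (r := (1 - t) * lam) in Hpsi_mass; [|nra].
  assert (0 <= t * (/ t - 1) * lam * mass W chi a b)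
    by (apply Rmult_le_pos; [|lra]; apply Rmult_le_pos; nra).
  assert ((1 - t) * (lam * mass W psi a b) <= (1 - t) * energy W c psi a b)
    by (apply Rmult_le_compat_l; lra).
  nra.
Qed.

Theorem energy_ge_boundary_penalty eta : 0 < eta -> exists C, 0 <= C /\
  forall phi, C1fun phi ->
  (lam - eta) * mass W phi a b - C * (phi a ^ 2 + phi b ^ 2) <= energy W c phi a b.
Proof.
  intros Heta.
  set (t := eta / (2 * lam + 2 + eta)).
  assert (Ht : 0 < t < 1).
  { unfold t; split; [apply Rdiv_lt_0_compat; lra|].
    apply Rmult_lt_reg_r with (2 * lam + 2 + eta); [lra|].
    unfold Rdiv; rewrite Rmult_assoc, Rinv_l; lra. }
  assert (Ht_lam : 2 * t * lam <= eta).
  { assert (t * (2 * lam + 2 + eta) = eta) by (unfold t; field; lra); nra. }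
  assert (Hk : 1 <= / t) by (rewrite <- Rinv_1; apply Rinv_le_contravar; lra).
  set (I0 := RInt W a b); set (I1 := RInt (fun r => W r * (2 / (b - a) ^ 2 + c r)) a b).
  assert (HI0 : 0 <= I0) by (apply RInt_ge_0_cont; [lra | assumption | assumption]).
  assert (HI1 : 0 <= I1).
  { apply RInt_ge_0_cont; [lra | intros; auto_cont |].
    intros r Hr; apply Rmult_le_pos; [now apply W_nonneg|].
    pose proof (c_nonneg r Hr).
    assert (0 < 2 / (b - a) ^ 2) by (apply Rdiv_lt_0_compat, pow_lt; lra).
    lra. }
  exists ((/ t - 1) * (lam * I0 + I1)); split; [apply Rmult_le_pos; nra|].
  intros phi Hphi.
  destruct (C1fun_affine_interp (phi a) (phi b)) as [Hchi _].
  pose proof (energy_ge_rayleigh_perturbed phi _ t Hphi Hchi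
    ltac:(unfold affine_interp; field; lra) ltac:(unfold affine_interp; field; lra) Ht) as Hpert.
  pose proof (mass_affine_interp_le (phi a) (phi b)) as Hmchi; fold I0 in Hmchi.
  pose proof (energy_affine_interp_le (phi a) (phi b)) as Hechi; fold I1 in Hechi.
  pose proof (mass_nonneg W a b W_cont ltac:(lra) W_nonneg phi Hphi) as HNphi.
  assert (Hlam : (lam - eta) * mass W phi a b <= (1 - t) ^ 2 * lam * mass W phi a b)
    by (apply Rmult_le_compat_r; [assumption | nra]).
  assert (Hpen : lam * mass W (affine_interp a b (phi a) (phi b)) a b
                 + energy W c (affine_interp a b (phi a) (phi b)) a b
                 <= (lam * I0 + I1) * (phi a ^ 2 + phi b ^ 2))
    by (apply Rmult_le_compat_l with (r := lam) in Hmchi; [lra | assumption]).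
  apply Rmult_le_compat_l with (r := / t - 1) in Hpen; [|lra].
  lra.
Qed.

End BoundaryPenalty.

(** * A weighted trace inequality *)

Lemma exp_le_exp_of_le x y : x <= y -> exp x <= exp y.
Proof. intros [Hlt | ->]; [now apply Rlt_le, exp_increasing | apply Rle_refl]. Qed.

Lemma exp_le_inv x y : exp x <= exp y -> x <= y.
Proof.
  intros Hle; destruct (Rle_dec x y) as [|Hn]; [assumption|].
  apply Rnot_le_lt, exp_increasing in Hn; lra.
Qed.

(* Weighted Cauchy-Schwarz: integrate [2 k psi' <= e^g psi'^2 + k^2 e^(-g)] and
   take [k = D / B]. *)
Lemma sq_increment_le (g psi : R -> R) (p q B : R) :
  (forall x, continuous g x) -> C1fun psi -> p <= q -> 0 < B ->
  RInt (fun r => exp (- g r)) p q <= B ->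
  (psi q - psi p) ^ 2 / B <= RInt (fun r => exp (g r) * Derive psi r ^ 2) p q.
Proof.
  intros Hg Hpsi Hpq HB HI.
  pose proof (C1fun_Derive_continuous _ Hpsi).
  set (D := psi q - psi p); set (I := RInt (fun r => exp (g r) * Derive psi r ^ 2) p q).
  assert (Hamgm : forall k, 2 * k * D <= I + k ^ 2 * B).
  { intros k.
    assert (HD : RInt (fun r => 2 * k * Derive psi r) p q = 2 * k * D).
    { rewrite RInt_scal_R by now apply ex_RInt_cont.
      unfold D; rewrite RInt_Derive; [reflexivity | |]; intros; [apply Hpsi | auto]. }
    assert (Hk2 : 0 <= k ^ 2) by apply pow2_ge_0.
    apply Rle_trans with (I + k ^ 2 * RInt (fun r => exp (- g r)) p q); [|nra].
    rewrite <- HD; unfold I.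
    rewrite <- (Rmult_1_l (RInt (fun r => exp (g r) * Derive psi r ^ 2) p q)), <- RInt_lin_R
      by (apply ex_RInt_cont; intros; auto_cont).
    apply RInt_le_cont; [assumption | intros; auto_cont | intros; auto_cont |].
    intros r _; rewrite Rmult_1_l.
    assert (He : exp (g r) * exp (- g r) = 1) by (rewrite <- exp_plus, Rplus_opp_r; apply exp_0).
    assert (Hsq : exp (- g r) * (exp (g r) * Derive psi r - k) ^ 2
                  = exp (g r) * Derive psi r ^ 2 + k ^ 2 * exp (- g r) - 2 * k * Derive psi r).
    { transitivity ((exp (g r) * exp (- g r)) * (exp (g r) * Derive psi r ^ 2)
        + k ^ 2 * exp (- g r) - 2 * k * (exp (g r) * exp (- g r)) * Derive psi r); [ring|].
      rewrite He; ring. }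
    assert (0 <= exp (- g r) * (exp (g r) * Derive psi r - k) ^ 2)
      by (apply Rmult_le_pos; [apply Rlt_le, exp_pos | apply pow2_ge_0]).
    lra. }
  specialize (Hamgm (D / B)).
  replace (2 * (D / B) * D) with (2 * (D ^ 2 / B)) in Hamgm by (field; lra).
  replace ((D / B) ^ 2 * B) with (D ^ 2 / B) in Hamgm by (field; lra).
  lra.
Qed.

Section TraceInequality.

Variables (g psi : R -> R) (y z a mu : R).
Hypothesis g_cont : forall x, continuous g x.
Hypothesis psi_C1 : C1fun psi.
Hypotheses (y_lt_z : y < z) (z_le_a : z <= a) (mu_pos : 0 < mu).

Let f := fun r => exp (g r) * (Derive psi r ^ 2 + mu * psi r ^ 2).

Let f_cont x : continuous f x.
Proof.
  pose proof (C1fun_continuous _ psi_C1); pose proof (C1fun_Derive_continuous _ psi_C1).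
  unfold f; auto_cont.
Qed.

Let f_nonneg x : 0 <= f x.
Proof.
  unfold f; apply Rmult_le_pos; [apply Rlt_le, exp_pos|].
  pose proof (pow2_ge_0 (Derive psi x)); pose proof (pow2_ge_0 (psi x)); nra.
Qed.

Lemma trace_ineq_drop p B K : y <= p <= z -> 4 * psi p ^ 2 < psi a ^ 2 ->
  (forall r, y < r < a -> - B <= g r) -> K <= / (4 * ((a - y) * exp B)) ->
  K * psi a ^ 2 <= RInt f y a.
Proof.
  intros Hp Hdrop HB HK.
  pose proof (C1fun_Derive_continuous _ psi_C1).
  set (Bb := (a - y) * exp B).
  assert (HBb : 0 < Bb) by (apply Rmult_lt_0_compat; [lra | apply exp_pos]).
  assert (HI : RInt (fun r => exp (- g r)) p a <= Bb).
  { apply Rle_trans with (RInt (fun _ => exp B) p a).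
    - apply RInt_le_cont; [lra | intros; auto_cont | intros; auto_cont |].
      intros r Hr; apply exp_le_exp_of_le; pose proof (HB r ltac:(lra)); lra.
    - rewrite RInt_const_R; unfold Bb; apply Rmult_le_compat_r; [pose proof (exp_pos B) |]; lra. }
  pose proof (sq_increment_le g psi p a Bb g_cont psi_C1 ltac:(lra) HBb HI) as Hinc.
  assert (Hsq : psi a ^ 2 / 4 <= (psi a - psi p) ^ 2).
  { assert (Hfac : (psi a - psi p) ^ 2 - psi a ^ 2 / 4
                   = (psi a / 2 - psi p) * (3 * psi a / 2 - psi p)) by field.
    destruct (Rle_dec 0 (psi a)); nra. }
  assert (Hle : RInt (fun r => exp (g r) * Derive psi r ^ 2) p a <= RInt f p a).
  { apply RInt_le_cont; [lra | intros; auto_cont | assumption |].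
    intros r _; unfold f; apply Rmult_le_compat_l; [apply Rlt_le, exp_pos|].
    pose proof (pow2_ge_0 (psi r)); nra. }
  assert (Hsub : RInt f p a <= RInt f y a) by (apply RInt_le_superinterval; auto; lra).
  assert (HK' : K * psi a ^ 2 <= psi a ^ 2 / 4 / Bb).
  { replace (psi a ^ 2 / 4 / Bb) with (/ (4 * Bb) * psi a ^ 2) by (field; lra).
    apply Rmult_le_compat_r; [apply pow2_ge_0 | exact HK]. }
  assert (psi a ^ 2 / 4 / Bb <= (psi a - psi p) ^ 2 / Bb)
    by (apply Rmult_le_compat_r; [apply Rlt_le, Rinv_0_lt_compat |]; lra).
  lra.
Qed.

Lemma trace_ineq_plateau A K : (forall r, y <= r <= z -> psi a ^ 2 <= 4 * psi r ^ 2) ->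
  (forall r, y < r < z -> A <= g r) -> K <= (z - y) * exp A * mu / 4 ->
  K * psi a ^ 2 <= RInt f y a.
Proof.
  intros Hbig HA HK.
  set (T := exp A * (mu * (psi a ^ 2 / 4))).
  assert (Hlow : RInt (fun _ => T) y z <= RInt f y z).
  { apply RInt_le_cont; [lra | intros; auto_cont | assumption |].
    intros r Hr; unfold T, f.
    pose proof (Hbig r ltac:(lra)); pose proof (pow2_ge_0 (Derive psi r)).
    apply Rmult_le_compat; [apply Rlt_le, exp_pos | nra | apply exp_le_exp_of_le, HA | nra]; lra. }
  rewrite RInt_const_R in Hlow.
  assert (Hsub : RInt f y z <= RInt f y a) by (apply RInt_le_superinterval; auto; lra).
  assert (K * psi a ^ 2 <= (z - y) * exp A * mu / 4 * psi a ^ 2)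
    by (apply Rmult_le_compat_r; [apply pow2_ge_0 | exact HK]).
  unfold T in Hlow; nra.
Qed.

(* Either [psi^2 >= psi(a)^2 / 4] on all of [y, z], or [psi] drops by at least
   [|psi a| / 2] between some [p] in [y, z] and [a]. *)
Theorem trace_ineq A B K :
  (forall r, y < r < z -> A <= g r) -> (forall r, y < r < a -> - B <= g r) ->
  K <= (z - y) * exp A * mu / 4 -> K <= / (4 * ((a - y) * exp B)) ->
  K * psi a ^ 2 <= RInt (fun r => exp (g r) * (Derive psi r ^ 2 + mu * psi r ^ 2)) y a.
Proof.
  intros HA HB HK1 HK2.
  destruct (classic (exists p, y <= p <= z /\ 4 * psi p ^ 2 < psi a ^ 2)) as [[p [Hp Hdrop]] | Hno].
  - exact (trace_ineq_drop p B K Hp Hdrop HB HK2).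
  - apply (trace_ineq_plateau A K); [|assumption | assumption].
    intros r Hr; apply Rnot_lt_le; intros Hlt; apply Hno; now exists r.
Qed.

End TraceInequality.

(** * The step profile *)

Lemma exists_transition (P : nat -> Prop) (N k : nat) : ~ P N -> P (k + N)%nat ->
  exists j, (N <= j)%nat /\ ~ P j /\ P (S j).
Proof.
  intros HN; induction k as [|k IH]; intros Hk; [contradiction|].
  destruct (classic (P (k + N)%nat)) as [Hp|Hp]; [now apply IH|].
  exists (k + N)%nat; repeat split; [lia | assumption | assumption].
Qed.

Lemma pow_le_one x n : 0 <= x <= 1 -> x ^ n <= 1.
Proof. intros Hx; rewrite <- (pow1 n); now apply pow_incr. Qed.

Lemma pow_antitone x n m : 0 <= x <= 1 -> (n <= m)%nat -> x ^ m <= x ^ n.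
Proof.
  intros Hx Hnm; replace m with (n + (m - n))%nat by lia; rewrite pow_add.
  pose proof (pow_le x n (proj1 Hx)); pose proof (pow_le_one x (m - n) Hx); nra.
Qed.

Lemma pow_eq_exp_ln x n : 0 < x -> x ^ n = exp (INR n * ln x).
Proof. intros Hx; rewrite <- ln_pow, exp_ln by (try apply pow_lt; assumption); reflexivity. Qed.

Lemma pow_exp_eventually_le (h be s E : R) (N : nat) : 0 < h <= 1 -> 0 < be < 1 -> 0 < E ->
  0 <= s -> exists m, be ^ (m + N) * exp (2 * s * h ^ S (m + N)) <= E.
Proof.
  intros Hh Hbe HE Hs.
  destruct (pow_lt_1_zero be ltac:(rewrite Rabs_pos_eq; lra) (E * exp (- (2 * s))))
    as [m Hm]; [apply Rmult_lt_0_compat; [assumption | apply exp_pos]|].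
  exists m; specialize (Hm (m + N)%nat ltac:(lia)).
  rewrite Rabs_pos_eq in Hm by (apply pow_le; lra).
  assert (exp (2 * s * h ^ S (m + N)) <= exp (2 * s)).
  { apply exp_le_exp_of_le; assert (h ^ S (m + N) <= 1) by (apply pow_le_one; lra); nra. }
  apply Rlt_le, Rle_lt_trans with (be ^ (m + N) * exp (2 * s));
    [apply Rmult_le_compat_l; [apply pow_le|]; lra|].
  apply Rmult_lt_compat_r with (r := exp (2 * s)) in Hm; [|apply exp_pos].
  rewrite Rmult_assoc, <- exp_plus, Rplus_opp_l, exp_0, Rmult_1_r in Hm; exact Hm.
Qed.

(* Take [n] where [be^j exp (2 s h^(j+1))] crosses below [E] past a threshold
   [N]; failure at [j = n - 1] bounds [2 s h^n] from below, and since [nu > 1]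
   the factor [exp (2 s nu h^n)] then outweighs [be^n]. *)
Lemma balanced_level (h be nu C E : R) : 0 < h < 1 -> 0 < be < 1 -> 1 < nu -> 0 < C -> 0 < E ->
  exists s0, 0 <= s0 /\ forall s, s0 <= s -> exists n,
    C <= be ^ n * exp (2 * s * (nu * h ^ n)) /\ be ^ n * exp (2 * s * h ^ S n) <= E.
Proof.
  intros Hh Hbe Hnu HC HE.
  set (lb := - ln be).
  assert (Hlb : 0 < lb).
  { pose proof (ln_increasing be 1 ltac:(lra) ltac:(lra)) as Hln; rewrite ln_1 in Hln.
    unfold lb; lra. }
  assert (Hpow : forall n, be ^ n = exp (- (INR n * lb)))
    by (intros; unfold lb; rewrite pow_eq_exp_ln by lra; f_equal; ring).
  destruct (INR_archimed ((nu - 1) * lb) (ln C + lb - nu * ln E)) as [N HN]; [nra|].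
  assert (HhN : 0 < h ^ S N) by (apply pow_lt; lra).
  exists (Rmax 0 ((ln E + INR N * lb) / (2 * h ^ S N) + 1)); split; [apply Rmax_l|].
  intros s Hs.
  set (P := fun j => be ^ j * exp (2 * s * h ^ S j) <= E).
  assert (HPN : ~ P N).
  { unfold P; rewrite Hpow, <- exp_plus, <- (exp_ln E) at 1 by assumption.
    intros Hle; apply exp_le_inv in Hle.
    assert (Hs' : (ln E + INR N * lb) / (2 * h ^ S N) + 1 <= s)
      by (eapply Rle_trans; [apply Rmax_r | exact Hs]).
    apply Rmult_le_compat_r with (r := 2 * h ^ S N) in Hs'; [|lra].
    replace (((ln E + INR N * lb) / (2 * h ^ S N) + 1) * (2 * h ^ S N))
      with (ln E + INR N * lb + 2 * h ^ S N) in Hs' by (field; lra).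
    lra. }
  assert (Hs0 : 0 <= s) by (eapply Rle_trans; [apply Rmax_l | exact Hs]).
  destruct (pow_exp_eventually_le h be s E N ltac:(lra) Hbe HE Hs0) as [m Hm].
  destruct (exists_transition P N m HPN Hm) as [j [HjN [Hj HSj]]].
  exists (S j); split; [|exact HSj].
  unfold P in Hj; apply Rnot_le_lt in Hj.
  rewrite Hpow, <- exp_plus, <- (exp_ln E) in Hj by assumption; apply exp_lt_inv in Hj.
  rewrite Hpow, <- exp_plus, <- (exp_ln C) by assumption; apply exp_le_exp_of_le.
  rewrite S_INR in *.
  assert (INR N * ((nu - 1) * lb) <= INR j * ((nu - 1) * lb))
    by (apply Rmult_le_compat_r; [nra | now apply le_INR]).
  nra.
Qed.

Section StepPoints.

Variables (de al be a : R) (l : nat).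
Hypotheses (al_pos : 0 < al) (al_lt_be : al < be) (be_lt_1 : be < 1).
Hypothesis step_series : is_series (fun i => al ^ (S i + l) + be ^ (S i + l)) (a - de).

Local Notation x := (xs de al be l).
Local Notation y := (ys de al be l).

Lemma xs_succ n : x (S n) = x n + (al ^ (S n + l) + be ^ (S n + l)).
Proof. simpl; ring. Qed.

Lemma xs_lt_succ n : x n < x (S n).
Proof.
  rewrite xs_succ; pose proof (pow_lt al (S n + l) al_pos); pose proof (pow_lt be (S n + l)).
  lra.
Qed.

Lemma xs_le_of_le n m : (n <= m)%nat -> x n <= x m.
Proof.
  induction 1 as [|m _ IH]; [apply Rle_refl|].
  apply Rle_trans with (1 := IH), Rlt_le, xs_lt_succ.
Qed.

Lemma is_lim_seq_xs : is_lim_seq x a.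
Proof.
  apply is_lim_seq_incr_1.
  apply is_lim_seq_ext with (fun n => de + sum_n (fun i => al ^ (S i + l) + be ^ (S i + l)) n).
  - induction n as [|n IH]; [rewrite sum_O; simpl; ring|].
    rewrite sum_Sn, (xs_succ (S n)), <- IH; unfold plus; simpl; ring.
  - replace a with (de + (a - de)) by ring.
    apply is_lim_seq_plus'; [apply is_lim_seq_const | exact step_series].
Qed.

Lemma xs_lt_lim n : x n < a.
Proof.
  apply Rlt_le_trans with (1 := xs_lt_succ n).
  apply (is_lim_seq_le (fun _ => x (S n)) (fun k => x (k + S n)) (x (S n)) a).
  - intros k; apply xs_le_of_le; lia.
  - apply is_lim_seq_const.
  - apply (is_lim_seq_incr_n x (S n)), is_lim_seq_xs.
Qed.

Lemma xs_ge_start n : de <= x n.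
Proof. apply (xs_le_of_le 0 n); lia. Qed.

Lemma xs_exceeds r : r < a -> exists K, r < x K.
Proof.
  intros Hr; pose proof is_lim_seq_xs as Hlim; apply is_lim_seq_spec in Hlim.
  destruct (Hlim (mkposreal (a - r) ltac:(lra))) as [K HK].
  exists K; specialize (HK K (Nat.le_refl K)); simpl in HK; apply Rabs_def2 in HK; lra.
Qed.

Lemma lim_sub_xs_le n : a - x n <= 2 * be ^ n / (1 - be).
Proof.
  assert (Hgap : forall k, x (k + n) - x n <= 2 * be ^ n / (1 - be) - 2 * be ^ (k + n) / (1 - be)).
  { induction k as [|k IH]; [simpl; lra|].
    replace (S k + n)%nat with (S (k + n)) by lia; rewrite xs_succ.
    assert (Hbe : be ^ (S (k + n) + l) <= be ^ (k + n)).
    { apply pow_antitone; [lra | lia]. }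
    assert (Hal : al ^ (S (k + n) + l) <= be ^ (S (k + n) + l)) by (apply pow_incr; lra).
    replace (2 * be ^ n / (1 - be) - 2 * be ^ S (k + n) / (1 - be))
      with (2 * be ^ n / (1 - be) - 2 * be ^ (k + n) / (1 - be) + 2 * be ^ (k + n))
      by (simpl; field; lra).
    lra. }
  assert (Hbound : forall k, x (k + n) <= x n + 2 * be ^ n / (1 - be)).
  { intros k; specialize (Hgap k).
    assert (0 <= 2 * be ^ (k + n) / (1 - be))
      by (apply Rdiv_le_0_compat; [pose proof (pow_le be (k + n)) |]; lra).
    lra. }
  pose proof (is_lim_seq_le (fun k => x (k + n)) (fun _ => x n + 2 * be ^ n / (1 - be)) a _
    Hbound (proj1 (is_lim_seq_incr_n x n a) is_lim_seq_xs) (is_lim_seq_const _)) as Hle.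
  simpl in Hle; lra.
Qed.

Lemma ys_between n : x n < y n /\ x (S n) = y n + be ^ (n + l + 1).
Proof.
  unfold ys; pose proof (pow_lt al (n + l + 1) al_pos); split; [lra|].
  rewrite xs_succ; replace (S n + l)%nat with (n + l + 1)%nat by lia; ring.
Qed.

Lemma xs_piece n r : x n <= r < a -> exists k, (n <= k)%nat /\ x k <= r < x (S k).
Proof.
  intros [Hnr Hra]; destruct (xs_exceeds r Hra) as [K HK].
  assert (HnK : (n < K)%nat).
  { destruct (Nat.lt_ge_cases n K) as [|HKn]; [assumption|].
    pose proof (xs_le_of_le K n HKn); lra. }
  clear Hra; induction K as [|K IH]; [lia|].
  destruct (Nat.eq_dec n K) as [<-|HnK']; [exists n; split; [lia | lra]|].
  destruct (Rlt_le_dec r (x K)) as [Hlt|Hge]; [apply IH; [assumption | lia]|].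
  exists K; split; [lia | lra].
Qed.

Section Profile.

Variables (M : R -> R) (h nu : R).
Hypotheses (h_pos : 0 < h) (h_lt_al : h < al) (nu_gt_1 : 1 < nu).
Hypothesis M_cont : forall r, continuous M r.
Hypothesis M_lim_nonneg : 0 <= M a.
Hypothesis M_on_dips : forall n r, x n <= r < y n -> - h ^ n <= M r.
Hypothesis M_on_bumps : forall n r, y n <= r < x (S n) -> nu * h ^ n <= M r.

Lemma step_profile_lower n r : x n <= r <= a -> - h ^ n <= M r.
Proof.
  intros Hr; pose proof (pow_le h n ltac:(lra)) as Hhn.
  destruct (Req_dec r a) as [->|Hra]; [lra|].
  destruct (xs_piece n r ltac:(lra)) as [k [Hnk Hk]].
  assert (Hhk : h ^ k <= h ^ n) by (apply pow_antitone; [lra | assumption]).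
  destruct (Rlt_le_dec r (y k)) as [Hdip|Hbump].
  - pose proof (M_on_dips k r ltac:(lra)); lra.
  - pose proof (M_on_bumps k r ltac:(lra)); pose proof (pow_le h k ltac:(lra)); nra.
Qed.

(* On the bump [y_n, x_(n+1)] the weight is at least [exp (2 s nu h^n)], while on
   [y_n, a] it is at least [exp (- 2 s h^(n+1))]. *)
Lemma trace_at_level mu K s n psi : 0 < mu -> 0 <= s -> 0 < K -> C1fun psi ->
  K <= be ^ (n + l + 1) / 2 * exp (2 * s * (nu * h ^ n)) * mu / 4 ->
  K * (4 * ((a - x n) * exp (2 * s * h ^ S n))) <= 1 ->
  K * psi a ^ 2 <= RInt (fun r => exp (2 * s * M r) * (Derive psi r ^ 2 + mu * psi r ^ 2)) de a.
Proof.
  intros Hmu Hs HK Hpsi Hbump Hgap.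
  pose proof (C1fun_continuous _ Hpsi); pose proof (C1fun_Derive_continuous _ Hpsi).
  destruct (ys_between n) as [Hxy HxS].
  pose proof (xs_ge_start n); pose proof (xs_lt_lim (S n)).
  pose proof (pow_lt be (n + l + 1) ltac:(lra)); pose proof (pow_le h (S n) ltac:(lra)).
  set (z := y n + be ^ (n + l + 1) / 2).
  assert (Hdip : forall r, y n < r < a -> - (2 * s * h ^ S n) <= 2 * s * M r).
  { intros r Hr.
    assert (HM : - h ^ S n <= M r).
    { destruct (Rlt_le_dec r (x (S n))) as [Hlt|Hge].
      - pose proof (M_on_bumps n r ltac:(lra)); pose proof (pow_le h n ltac:(lra)); nra.
      - apply step_profile_lower; lra. }
    pose proof (Rmult_le_compat_l (2 * s) _ _ ltac:(lra) HM); lra. }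
  assert (HK2 : K <= / (4 * ((a - y n) * exp (2 * s * h ^ S n)))).
  { pose proof (exp_pos (2 * s * h ^ S n)).
    apply Rmult_le_reg_r with (4 * ((a - y n) * exp (2 * s * h ^ S n))); [nra|].
    rewrite Rinv_l by nra.
    apply Rle_trans with (2 := Hgap); apply Rmult_le_compat_l; nra. }
  apply Rle_trans with
    (RInt (fun r => exp (2 * s * M r) * (Derive psi r ^ 2 + mu * psi r ^ 2)) (y n) a).
  - apply (trace_ineq (fun r => 2 * s * M r) psi (y n) z a mu ltac:(intros; auto_cont) Hpsi
      ltac:(unfold z; lra) ltac:(unfold z; lra) Hmu (2 * s * (nu * h ^ n)) (2 * s * h ^ S n));
      [| exact Hdip | unfold z; replace (y n + _ - y n) with (be ^ (n + l + 1) / 2) by ring;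
                      exact Hbump | exact HK2].
    intros r Hr; apply Rmult_le_compat_l; [lra | apply M_on_bumps; unfold z in Hr; lra].
  - apply RInt_le_superinterval; try solve [intros; auto_cont]; [lra | lra | lra |].
    intros r _; apply Rmult_le_pos; [apply Rlt_le, exp_pos|].
    pose proof (pow2_ge_0 (Derive psi r)); pose proof (pow2_ge_0 (psi r)); nra.
Qed.

Theorem trace_step_profile mu K : 0 < mu -> 0 < K -> exists s0, forall s, s0 <= s ->
  forall psi, C1fun psi ->
  K * psi a ^ 2 <= RInt (fun r => exp (2 * s * M r) * (Derive psi r ^ 2 + mu * psi r ^ 2)) de a.
Proof.
  intros Hmu HK.
  assert (Hbe_l : 0 < be ^ (l + 1)) by (apply pow_lt; lra).
  destruct (balanced_level h be nu (8 * K / (mu * be ^ (l + 1))) ((1 - be) / (8 * K)))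
    as [s0 [Hs0 Hlevel]]; try split; try lra.
  { apply Rdiv_lt_0_compat; [lra | now apply Rmult_lt_0_compat]. }
  { apply Rdiv_lt_0_compat; lra. }
  exists s0; intros s Hs psi Hpsi.
  destruct (Hlevel s Hs) as [n [Hbig Hsmall]].
  apply (trace_at_level mu K s n psi Hmu ltac:(lra) HK Hpsi).
  - replace (be ^ (n + l + 1) / 2 * exp (2 * s * (nu * h ^ n)) * mu / 4)
      with (be ^ n * exp (2 * s * (nu * h ^ n)) * (mu * be ^ (l + 1) / 8))
      by (replace (n + l + 1)%nat with (n + (l + 1))%nat by lia;
          rewrite (pow_add be n (l + 1)); field).
    apply Rmult_le_compat_r with (r := mu * be ^ (l + 1) / 8) in Hbig; [|nra].
    replace (8 * K / (mu * be ^ (l + 1)) * (mu * be ^ (l + 1) / 8)) with K in Hbig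
      by (field; lra).
    exact Hbig.
  - pose proof (lim_sub_xs_le n) as Htail; pose proof (exp_pos (2 * s * h ^ S n)).
    apply Rmult_le_compat_l with (r := 8 * K) in Hsmall; [|lra].
    replace (8 * K * ((1 - be) / (8 * K))) with (1 - be) in Hsmall by (field; lra).
    assert (Hdist : (a - x n) * (1 - be) <= 2 * be ^ n).
    { apply Rmult_le_compat_r with (r := 1 - be) in Htail; [|lra].
      replace (2 * be ^ n / (1 - be) * (1 - be)) with (2 * be ^ n) in Htail by (field; lra).
      exact Htail. }
    apply Rmult_le_reg_r with (1 - be); [lra|].
    apply Rmult_le_compat_r with (r := 4 * K * exp (2 * s * h ^ S n)) in Hdist; [|nra].
    nra.
Qed.

End Profile.

End StepPoints.

(** * Test functions for [lambda_s] and the upper bound *)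

Section WeightedEigenvalue.

Variables (d : nat) (m c : R -> R) (s : R).
Hypothesis m_cont : forall x, continuous m x.
Hypothesis c_cont : forall x, continuous c x.
Hypothesis c_nonneg : forall x, 0 < x < 1 -> 0 <= c x.

Let W := exp_weight d m s.

Let W_cont x : continuous W x.
Proof. now apply continuous_exp_weight. Qed.

Let W_pos x : 0 < x -> 0 < W x.
Proof. intros; apply Rmult_lt_0_compat; [now apply pow_lt | apply exp_pos]. Qed.

Let W_nonneg x : 0 < x < 1 -> 0 <= W x.
Proof. intros; apply Rlt_le, W_pos; lra. Qed.

Lemma weighted_values_nonneg q : weighted_values d m c s q -> 0 <= q.
Proof.
  intros [phi [Hphi [_ ->]]]; apply energy_nonneg;
    [exact W_cont | exact c_cont | lra | exact W_nonneg | exact c_nonneg | exact Hphi].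
Qed.

Lemma lambda_s_le_quotient psi : C1fun psi -> 0 < mass W psi 0 1 ->
  lambda_s d m c s <= energy W c psi 0 1 / mass W psi 0 1.
Proof.
  intros Hpsi HN.
  destruct (normalize_mass W c 0 1 W_cont c_cont psi Hpsi HN) as [Hphi [Hm He]].
  rewrite lambda_s_glb, <- He; apply real_Glb_Rbar_le.
  - exists 0; apply weighted_values_nonneg.
  - eexists; split; [exact Hphi|]; split; [exact Hm | reflexivity].
Qed.

Lemma weighted_values_inhabited : exists q, weighted_values d m c s q.
Proof.
  assert (Hone : C1fun (fun _ => 1)) by apply C1fun_const.
  assert (HN : 0 < mass W (fun _ => 1) 0 1).
  { apply RInt_gt_0; [lra | | intros; unfold W, exp_weight; auto_cont].
    intros x Hx; rewrite pow1, Rmult_1_r; apply W_pos; lra. }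
  destruct (normalize_mass W c 0 1 W_cont c_cont _ Hone HN) as [Hphi [Hm _]].
  eexists; eexists; split; [exact Hphi|]; split; [exact Hm | reflexivity].
Qed.

Lemma lambda_s_ge L : (forall phi, C1fun phi -> mass W phi 0 1 = 1 -> L <= energy W c phi 0 1) ->
  L <= lambda_s d m c s.
Proof.
  intros HL; rewrite lambda_s_glb; apply real_Glb_Rbar_ge; [apply weighted_values_inhabited|].
  intros q [phi [Hphi [Hm ->]]]; now apply HL.
Qed.

End WeightedEigenvalue.

Definition restrict_to (a b : R) (f : R -> R) (r : R) : R :=
  if Rle_dec a r then if Rle_dec r b then f r else 0 else 0.

Section Restriction.

Variables (a b : R) (f : R -> R).
Hypothesis a_lt_b : a < b.

Lemma restrict_to_in r : a < r < b -> restrict_to a b f r = f r.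
Proof.
  intros Hr; unfold restrict_to.
  destruct (Rle_dec a r); [|lra]; destruct (Rle_dec r b); [reflexivity | lra].
Qed.

Lemma restrict_to_out r : r < a \/ b < r -> restrict_to a b f r = 0.
Proof.
  intros Hr; unfold restrict_to.
  destruct (Rle_dec a r); [|reflexivity]; destruct (Rle_dec r b); [lra | reflexivity].
Qed.

Lemma restrict_to_of_zero r : f r = 0 -> restrict_to a b f r = 0.
Proof.
  intros Hr; unfold restrict_to.
  destruct (Rle_dec a r); [|reflexivity]; destruct (Rle_dec r b); [exact Hr | reflexivity].
Qed.

Lemma locally_restrict_to_in r : a < r < b -> locally r (fun y => restrict_to a b f y = f y).
Proof.
  intros Hr; apply (filter_imp (fun y => a < y /\ y < b)); [intros; now apply restrict_to_in|].
  apply open_and; [apply open_gt | apply open_lt | exact Hr].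
Qed.

Lemma locally_restrict_to_out r : r < a \/ b < r -> locally r (fun y => restrict_to a b f y = 0).
Proof.
  intros [Hr|Hr].
  - apply (filter_imp (fun y => y < a)); [intros; apply restrict_to_out; lra | now apply open_lt].
  - apply (filter_imp (fun y => b < y)); [intros; apply restrict_to_out; lra | now apply open_gt].
Qed.

Hypothesis f_C1 : C1fun f.
Hypothesis f_zero_near_a : locally a (fun y => f y = 0).
Hypothesis f_zero_near_b : locally b (fun y => f y = 0).

Lemma C1fun_restrict_to : C1fun (restrict_to a b f).
Proof.
  assert (Hzero : forall x, locally x (fun y => f y = 0) ->
    exists g, C1fun g /\ locally x (fun y => restrict_to a b f y = g y)).
  { intros x Hx; exists (fun _ => 0); split; [apply C1fun_const|].
    eapply filter_imp; [|exact Hx]; intros; now apply restrict_to_of_zero. }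
  apply C1fun_local; intros x.
  destruct (Rlt_le_dec x a) as [Hxa|Hax]; [|destruct (Req_dec x a) as [->|Hxa]];
    [| now apply Hzero |].
  - exists (fun _ => 0); split; [apply C1fun_const | apply locally_restrict_to_out; lra].
  - destruct (Rlt_le_dec x b) as [Hxb|Hbx]; [|destruct (Req_dec x b) as [->|Hxb]];
      [| now apply Hzero |].
    + exists f; split; [exact f_C1 | apply locally_restrict_to_in; lra].
    + exists (fun _ => 0); split; [apply C1fun_const | apply locally_restrict_to_out; lra].
Qed.

Lemma Derive_restrict_to_in r : a < r < b -> Derive (restrict_to a b f) r = Derive f r.
Proof. intros; now apply Derive_ext_loc, locally_restrict_to_in. Qed.

Lemma Derive_restrict_to_out r : r < a \/ b < r -> Derive (restrict_to a b f) r = 0.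
Proof.
  intros Hr; rewrite (Derive_ext_loc _ (fun _ => 0)); [apply Derive_const|].
  now apply locally_restrict_to_out.
Qed.

End Restriction.

Lemma dead_zone_comp_zero_near e (phi : R -> R) (x : R) : 0 < e -> continuous phi x -> phi x = 0 ->
  locally x (fun y => dead_zone e (phi y) = 0).
Proof.
  intros He Hphi Hx.
  apply (filterlim_locally phi (phi x)) with (eps := mkposreal e He) in Hphi.
  eapply filter_imp; [|exact Hphi]; intros y Hy; simpl in Hy.
  apply (dead_zone_bounds e (phi y) He); rewrite Hx in Hy; unfold ball in Hy; simpl in Hy.
  unfold AbsRing_ball, abs, minus, plus, opp in Hy; simpl in Hy.
  replace (phi y + - 0) with (phi y) in Hy by ring; lra.
Qed.

Section DeadZoneEstimates.

Variables (W c : R -> R) (u v e : R) (phi : R -> R).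
Hypothesis W_cont : forall x, continuous W x.
Hypothesis c_cont : forall x, continuous c x.
Hypothesis u_le_v : u <= v.
Hypothesis W_nonneg : forall x, u < x < v -> 0 <= W x.
Hypothesis c_nonneg : forall x, u < x < v -> 0 <= c x.
Hypothesis e_pos : 0 < e.
Hypothesis phi_C1 : C1fun phi.

Let F := fun y => dead_zone e (phi y).

Let F_C1 : C1fun F /\ forall x, Derive F x = dead_zone_slope e (phi x) * Derive phi x.
Proof. now apply C1fun_dead_zone_comp. Qed.

Lemma energy_dead_zone_le : energy W c F u v <= energy W c phi u v.
Proof.
  destruct F_C1 as [HF HdF].
  pose proof (C1fun_continuous _ phi_C1); pose proof (C1fun_Derive_continuous _ phi_C1).
  pose proof (C1fun_continuous _ HF); pose proof (C1fun_Derive_continuous _ HF).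
  apply RInt_le_cont; [assumption | intros; auto_cont | intros; auto_cont |].
  intros r Hr; rewrite HdF; apply Rmult_le_compat_l; [now apply W_nonneg|].
  destruct (dead_zone_bounds e (phi r) e_pos) as [Hslope [Hsq _]].
  apply Rplus_le_compat; [|apply Rmult_le_compat_l; [now apply c_nonneg | exact Hsq]].
  rewrite Rpow_mult_distr; pose proof (pow2_ge_0 (Derive phi r)).
  assert (dead_zone_slope e (phi r) ^ 2 <= 1) by nra; nra.
Qed.

Lemma mass_dead_zone_ge :
  (1 - 2 * e) * mass W phi u v - 2 * e * RInt W u v <= mass W F u v.
Proof.
  destruct F_C1 as [HF _].
  pose proof (C1fun_continuous _ phi_C1); pose proof (C1fun_continuous _ HF).
  unfold mass; apply Rle_trans with
    (RInt (fun r => (1 - 2 * e) * (W r * phi r ^ 2) + - (2 * e) * W r) u v).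
  { rewrite RInt_lin_R by (apply ex_RInt_cont; intros; auto_cont); right; ring. }
  apply RInt_le_cont; [assumption | intros; auto_cont | intros; auto_cont |].
  intros r Hr; destruct (dead_zone_bounds e (phi r) e_pos) as [_ [_ [Hlow _]]].
  pose proof (W_nonneg r Hr).
  replace ((1 - 2 * e) * (W r * phi r ^ 2) + - (2 * e) * W r)
    with (W r * ((1 - 2 * e) * phi r ^ 2 - 2 * e)) by ring.
  now apply Rmult_le_compat_l.
Qed.

End DeadZoneEstimates.

Lemma RInt_split3 (f : R -> R) (a b : R) : (forall x, continuous f x) ->
  RInt f 0 1 = RInt f 0 a + RInt f a b + RInt f b 1.
Proof. intros Hf; now rewrite !RInt_Chasles_R. Qed.

Lemma mass_split3 (W phi : R -> R) (a b : R) : (forall x, continuous W x) -> C1fun phi ->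
  mass W phi 0 1 = mass W phi 0 a + mass W phi a b + mass W phi b 1.
Proof.
  intros HW Hphi; pose proof (C1fun_continuous _ Hphi).
  unfold mass; apply RInt_split3; intros; auto_cont.
Qed.

Lemma energy_split3 (W c phi : R -> R) (a b : R) :
  (forall x, continuous W x) -> (forall x, continuous c x) -> C1fun phi ->
  energy W c phi 0 1 = energy W c phi 0 a + energy W c phi a b + energy W c phi b 1.
Proof.
  intros HW Hc Hphi.
  pose proof (C1fun_continuous _ Hphi); pose proof (C1fun_Derive_continuous _ Hphi).
  unfold energy; apply RInt_split3; intros; auto_cont.
Qed.

Section Plateau.

Variables (d : nat) (m c : R -> R) (a b : R).
Hypotheses (a_pos : 0 < a) (a_lt_b : a < b) (b_lt_1 : b < 1).
Hypothesis m_cont : forall x, continuous m x.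
Hypothesis c_cont : forall x, continuous c x.
Hypothesis m_plateau : forall r, a <= r <= b -> m r = 0.
Hypothesis c_pos : forall r, 0 <= r <= 1 -> 0 < c r.

Lemma exp_weight_plateau s r : a <= r <= b -> exp_weight d m s r = rad_weight d r.
Proof.
  intros Hr; unfold exp_weight, rad_weight; rewrite m_plateau, Rmult_0_r, exp_0 by assumption; ring.
Qed.

Lemma mass_exp_weight_plateau s phi : mass (exp_weight d m s) phi a b = mass (rad_weight d) phi a b.
Proof.
  apply RInt_ext; intros x Hx; rewrite Rmin_left, Rmax_right in Hx by lra.
  now rewrite exp_weight_plateau by lra.
Qed.

Lemma energy_exp_weight_plateau s phi :
  energy (exp_weight d m s) c phi a b = energy (rad_weight d) c phi a b.
Proof.
  apply RInt_ext; intros x Hx; rewrite Rmin_left, Rmax_right in Hx by lra.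
  now rewrite exp_weight_plateau by lra.
Qed.

Section Extension.

Variables (s : R) (f : R -> R).
Hypothesis f_C1 : C1fun f.
Hypothesis f_zero_near_a : locally a (fun y => f y = 0).
Hypothesis f_zero_near_b : locally b (fun y => f y = 0).

Let psi := restrict_to a b f.

Let psi_C1 : C1fun psi.
Proof. now apply C1fun_restrict_to. Qed.

Lemma mass_exp_weight_restrict : mass (exp_weight d m s) psi 0 1 = mass (rad_weight d) f a b.
Proof.
  pose proof (C1fun_continuous _ psi_C1); pose proof (continuous_exp_weight d m s m_cont).
  unfold mass; rewrite (RInt_split3 _ a b) by (intros; auto_cont).
  rewrite (RInt_eq_0 _ 0 a), (RInt_eq_0 _ b 1); try lra;
    try (intros x Hx; unfold psi; rewrite restrict_to_out by lra; ring).
  rewrite Rplus_0_l, Rplus_0_r; apply RInt_ext; intros x Hx.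
  rewrite Rmin_left, Rmax_right in Hx by lra.
  unfold psi; rewrite restrict_to_in, exp_weight_plateau by lra; reflexivity.
Qed.

Lemma energy_exp_weight_restrict :
  energy (exp_weight d m s) c psi 0 1 = energy (rad_weight d) c f a b.
Proof.
  pose proof (C1fun_continuous _ psi_C1); pose proof (C1fun_Derive_continuous _ psi_C1).
  pose proof (continuous_exp_weight d m s m_cont).
  unfold energy; rewrite (RInt_split3 _ a b) by (intros; auto_cont).
  rewrite (RInt_eq_0 _ 0 a), (RInt_eq_0 _ b 1); try lra;
    try (intros x Hx; unfold psi;
         rewrite Derive_restrict_to_out, restrict_to_out by lra; ring).
  rewrite Rplus_0_l, Rplus_0_r; apply RInt_ext; intros x Hx.
  rewrite Rmin_left, Rmax_right in Hx by lra.
  unfold psi; rewrite Derive_restrict_to_in, restrict_to_in, exp_weight_plateau by lra.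
  reflexivity.
Qed.

End Extension.

Let rad_weight_nonneg x : a < x < b -> 0 <= rad_weight d x.
Proof. intros; apply pow_le; lra. Qed.

Let c_nonneg x : a < x < b -> 0 <= c x.
Proof. intros; apply Rlt_le, c_pos; lra. Qed.

(* Flattened to zero near [a] and [b] by the dead zone and extended by zero, a
   function vanishing at [a] and [b] becomes admissible for every [s], since
   [m = 0] on [a, b]. *)
Lemma lambda_s_le_flattened s phi e : C1fun phi -> phi a = 0 -> phi b = 0 -> 0 < e ->
  let D := (1 - 2 * e) * mass (rad_weight d) phi a b - 2 * e * RInt (rad_weight d) a b in
  0 < D -> lambda_s d m c s <= energy (rad_weight d) c phi a b / D.
Proof.
  intros Hphi Hphia Hphib He D HD.
  set (F := fun y => dead_zone e (phi y)).
  destruct (C1fun_dead_zone_comp e phi He Hphi) as [HF _]; fold F in HF.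
  pose proof (C1fun_continuous _ Hphi) as Hphic.
  assert (HFa : locally a (fun y => F y = 0)) by (apply dead_zone_comp_zero_near; auto).
  assert (HFb : locally b (fun y => F y = 0)) by (apply dead_zone_comp_zero_near; auto).
  pose proof (mass_dead_zone_ge (rad_weight d) a b e phi (continuous_rad_weight d)
    ltac:(lra) rad_weight_nonneg He Hphi) as HN; fold F D in HN.
  pose proof (energy_dead_zone_le (rad_weight d) c a b e phi (continuous_rad_weight d) c_cont
    ltac:(lra) rad_weight_nonneg c_nonneg He Hphi) as HE; fold F in HE.
  pose proof (energy_nonneg (rad_weight d) c a b (continuous_rad_weight d) c_cont
    ltac:(lra) rad_weight_nonneg c_nonneg F HF).
  eapply Rle_trans.
  { apply (lambda_s_le_quotient d m c s m_cont c_cont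
      ltac:(intros; apply Rlt_le, c_pos; lra) (restrict_to a b F)).
    - now apply C1fun_restrict_to.
    - rewrite mass_exp_weight_restrict by assumption; lra. }
  rewrite mass_exp_weight_restrict, energy_exp_weight_restrict by assumption.
  unfold Rdiv; apply Rmult_le_compat; try lra.
  - apply Rlt_le, Rinv_0_lt_compat; lra.
  - apply Rinv_le_contravar; lra.
Qed.

Lemma lambda_s_le_dirichlet_value s q eps : dirichlet_values d c a b q -> 0 < eps ->
  lambda_s d m c s <= q + eps.
Proof.
  intros [phi [Hphi [Hphia [Hphib [Hmass ->]]]]] Heps.
  set (Q := energy (rad_weight d) c phi a b).
  assert (HQ : 0 <= Q)
    by exact (energy_nonneg (rad_weight d) c a b (continuous_rad_weight d) c_cont
                ltac:(lra) rad_weight_nonneg c_nonneg phi Hphi).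
  set (I := RInt (rad_weight d) a b).
  assert (HI : 0 <= I)
    by (apply RInt_ge_0_cont; [lra | apply continuous_rad_weight | exact rad_weight_nonneg]).
  set (kappa := 2 * (1 + I)).
  set (e := eps / (2 * kappa * (Q + eps))).
  assert (He : 0 < e) by (apply Rdiv_lt_0_compat; [|apply Rmult_lt_0_compat]; unfold kappa; lra).
  assert (Hke : kappa * e = eps / (2 * (Q + eps))) by (unfold e, kappa; field; lra).
  assert (Hke_half : kappa * e <= 1 / 2).
  { rewrite Hke; apply Rmult_le_reg_r with (2 * (Q + eps)); [lra|].
    unfold Rdiv; rewrite Rmult_assoc, Rinv_l; lra. }
  assert (HD : (1 - 2 * e) * mass (rad_weight d) phi a b - 2 * e * I = 1 - kappa * e)
    by (rewrite Hmass; unfold kappa; ring).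
  pose proof (lambda_s_le_flattened s phi e Hphi Hphia Hphib He) as Hflat; cbv zeta in Hflat.
  fold Q I in Hflat; rewrite HD in Hflat; specialize (Hflat ltac:(lra)).
  apply Rle_trans with (1 := Hflat), Rmult_le_reg_r with (1 - kappa * e); [lra|].
  unfold Rdiv; rewrite Rmult_assoc, Rinv_l, Rmult_1_r by lra.
  rewrite Hke; replace ((Q + eps) * (1 - eps / (2 * (Q + eps)))) with (Q + eps / 2) by (field; lra).
  lra.
Qed.

Theorem lambda_s_upper eps s : 0 < eps -> lambda_s d m c s <= lambda_D d c a b + eps.
Proof.
  intros Heps.
  destruct (real_Glb_Rbar_approx (dirichlet_values d c a b) (eps / 2)) as [q [Hq Hqle]];
    [apply dirichlet_values_inhabited; auto; intros; apply Rlt_le, c_pos; lra | lra |].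
  rewrite <- lambda_D_glb in Hqle.
  pose proof (lambda_s_le_dirichlet_value s q (eps / 2) Hq ltac:(lra)); lra.
Qed.

End Plateau.

(** * The lower bound *)

Lemma energy_ge_gap (V c phi : R -> R) (u p q v L mu : R) :
  (forall x, continuous V x) -> (forall x, continuous c x) -> C1fun phi ->
  u <= p -> p <= q -> q <= v -> 0 <= mu ->
  (forall x, u < x < v -> 0 <= V x) -> (forall x, u < x < v -> L + mu <= c x) ->
  L * mass V phi u v + energy V (fun _ => mu) phi p q <= energy V c phi u v.
Proof.
  intros HV Hc Hphi Hup Hpq Hqv Hmu HVpos Hgap.
  pose proof (C1fun_continuous _ Hphi); pose proof (C1fun_Derive_continuous _ Hphi).
  assert (Hsub : energy V (fun _ => mu) phi p q <= energy V (fun _ => mu) phi u v).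
  { apply RInt_le_superinterval; [intros; auto_cont | lra | lra | lra |].
    intros x Hx; apply Rmult_le_pos; [now apply HVpos|].
    pose proof (pow2_ge_0 (Derive phi x)); pose proof (pow2_ge_0 (phi x)); nra. }
  assert (Hsplit : L * mass V phi u v + energy V (fun _ => mu) phi u v
                   = RInt (fun r => L * (V r * phi r ^ 2)
                                    + 1 * (V r * (Derive phi r ^ 2 + mu * phi r ^ 2))) u v).
  { rewrite RInt_lin_R by (apply ex_RInt_cont; intros; auto_cont); unfold mass, energy; ring. }
  enough (L * mass V phi u v + energy V (fun _ => mu) phi u v <= energy V c phi u v) by lra.
  rewrite Hsplit; apply RInt_le_cont; [lra | intros; auto_cont | intros; auto_cont |].
  intros r Hr; pose proof (HVpos r Hr); pose proof (Hgap r Hr); pose proof (pow2_ge_0 (phi r)).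
  assert (0 <= V r * phi r ^ 2 * (c r - L - mu)) by (apply Rmult_le_pos; nra).
  nra.
Qed.

Lemma energy_exp_weight_ge (d : nat) (m phi : R -> R) (s mu p q w : R) :
  (forall x, continuous m x) -> C1fun phi -> p <= q -> 0 <= mu ->
  (forall r, p < r < q -> 0 <= w <= r ^ (d - 1)) ->
  w * RInt (fun r => exp (2 * s * m r) * (Derive phi r ^ 2 + mu * phi r ^ 2)) p q
  <= energy (exp_weight d m s) (fun _ => mu) phi p q.
Proof.
  intros Hm Hphi Hpq Hmu Hw.
  pose proof (C1fun_continuous _ Hphi); pose proof (C1fun_Derive_continuous _ Hphi).
  rewrite <- RInt_scal_R by (apply ex_RInt_cont; intros; auto_cont).
  apply RInt_le_cont; [assumption | intros; auto_cont | intros; unfold exp_weight; auto_cont |].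
  intros r Hr; unfold exp_weight; rewrite (Rmult_comm w).
  replace (r ^ (d - 1) * exp (2 * s * m r) * (Derive phi r ^ 2 + mu * phi r ^ 2))
    with (r ^ (d - 1) * (exp (2 * s * m r) * (Derive phi r ^ 2 + mu * phi r ^ 2))) by ring.
  rewrite (Rmult_comm (r ^ (d - 1))); apply Rmult_le_compat_l; [|apply Hw, Hr].
  apply Rmult_le_pos; [apply Rlt_le, exp_pos|].
  pose proof (pow2_ge_0 (Derive phi r)); pose proof (pow2_ge_0 (phi r)); nra.
Qed.

Lemma RInt_exp_energy_reflect (m phi : R -> R) (s mu p q : R) :
  (forall x, continuous m x) -> C1fun phi ->
  RInt (fun r => exp (2 * s * m r) * (Derive phi r ^ 2 + mu * phi r ^ 2)) (1 - q) (1 - p) =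
  RInt (fun t => exp (2 * s * m (1 - t)) *
                 (Derive (fun t => phi (1 - t)) t ^ 2 + mu * phi (1 - t) ^ 2)) p q.
Proof.
  intros Hm Hphi.
  pose proof (C1fun_continuous _ Hphi); pose proof (C1fun_Derive_continuous _ Hphi).
  destruct (C1fun_reflect phi Hphi) as [_ Hd].
  rewrite RInt_reflect by (intros; auto_cont).
  apply RInt_ext; intros t _; rewrite Hd; eq_in_R; ring.
Qed.

Lemma uniform_gap (c : R -> R) (L a b : R) : (forall x, continuous c x) -> 0 <= a -> b <= 1 ->
  (forall r, 0 <= r <= a \/ b <= r <= 1 -> L < c r) ->
  exists mu, 0 < mu /\ forall r, 0 <= r <= a \/ b <= r <= 1 -> L + mu <= c r.
Proof.
  intros Hc Ha Hb Hgap.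
  assert (Hpt : forall x, continuity_pt c x) by (intros; apply continuity_pt_filterlim, Hc).
  destruct (continuity_ab_min c 0 a Ha (fun x _ => Hpt x)) as [x1 [Hx1 Hx1r]].
  destruct (continuity_ab_min c b 1 Hb (fun x _ => Hpt x)) as [x2 [Hx2 Hx2r]].
  pose proof (Hgap x1 (or_introl Hx1r)); pose proof (Hgap x2 (or_intror Hx2r)).
  exists (Rmin (c x1) (c x2) - L); split; [apply Rmin_case; lra|].
  intros r [Hr|Hr]; [pose proof (Hx1 r Hr); pose proof (Rmin_l (c x1) (c x2)) |
                     pose proof (Hx2 r Hr); pose proof (Rmin_r (c x1) (c x2))]; lra.
Qed.

Section LowerBound.

Variables (d : nat) (m c : R -> R) (a b de h al be nu : R) (l : nat).
Hypotheses (a_pos : 0 < a) (a_lt_b : a < b) (b_lt_1 : b < 1) (ab_sum : a + b = 1).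
Hypothesis m_cont : forall x, continuous m x.
Hypothesis c_cont : forall x, continuous c x.
Hypothesis m_plateau : forall r, a <= r <= b -> m r = 0.
Hypothesis c_pos : forall r, 0 <= r <= 1 -> 0 < c r.
Hypothesis c_gap : forall r, 0 <= r <= a \/ b <= r <= 1 -> lambda_D d c a b < c r.
Hypotheses (de_pos : 0 < de) (de_lt_a : de < a).
Hypotheses (h_pos : 0 < h) (h_lt_al : h < al) (al_lt_be : al < be) (be_lt_1 : be < 1).
Hypothesis nu_gt_1 : 1 < nu.
Hypothesis step_series : is_series (fun i => al ^ (S i + l) + be ^ (S i + l)) (a - de).
Hypothesis m_above : above_mtilde m de h al be nu l.

Local Notation lamD := (lambda_D d c a b).

Let exp_weight_nonneg s x : 0 < x -> 0 <= exp_weight d m s x.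
Proof. intros; apply Rmult_le_pos; [apply pow_le; lra | apply Rlt_le, exp_pos]. Qed.

Lemma left_end_bound mu K : 0 < mu -> (forall r, 0 <= r <= a -> lamD + mu <= c r) -> 0 < K ->
  exists s1, forall s, s1 <= s -> forall phi, C1fun phi ->
  lamD * mass (exp_weight d m s) phi 0 a + de ^ (d - 1) * K * phi a ^ 2
  <= energy (exp_weight d m s) c phi 0 a.
Proof.
  intros Hmu Hgap HK.
  destruct (trace_step_profile de al be a l ltac:(lra) al_lt_be be_lt_1 step_series m h nu
    h_pos h_lt_al nu_gt_1 m_cont ltac:(rewrite m_plateau; lra)
    (fun n r Hr => proj1 (proj1 (m_above n r) Hr))
    (fun n r Hr => proj1 (proj2 (m_above n r) Hr)) mu K Hmu HK) as [s1 Htrace].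
  exists s1; intros s Hs phi Hphi.
  pose proof (energy_ge_gap (exp_weight d m s) c phi 0 de a a lamD mu
    (continuous_exp_weight d m s m_cont) c_cont Hphi ltac:(lra) ltac:(lra) ltac:(lra) ltac:(lra)
    ltac:(intros; apply exp_weight_nonneg; lra) ltac:(intros; apply Hgap; lra)) as Hend.
  pose proof (energy_exp_weight_ge d m phi s mu de a (de ^ (d - 1)) m_cont Hphi
    ltac:(lra) ltac:(lra)
    ltac:(intros; split; [apply pow_le | apply pow_incr]; lra)) as Hw.
  pose proof (Htrace s Hs phi Hphi) as Htr.
  pose proof (pow_le de (d - 1) ltac:(lra)).
  apply Rmult_le_compat_l with (r := de ^ (d - 1)) in Htr; [|assumption].
  lra.
Qed.

(* Under [r |-> 1 - r] (recall [a + b = 1]) the right end becomes a left end: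
   [above_mtilde] bounds [m (1 - r)] on the same step intervals. *)
Lemma right_end_bound mu K : 0 < mu -> (forall r, b <= r <= 1 -> lamD + mu <= c r) -> 0 < K ->
  exists s2, forall s, s2 <= s -> forall phi, C1fun phi ->
  lamD * mass (exp_weight d m s) phi b 1 + b ^ (d - 1) * K * phi b ^ 2
  <= energy (exp_weight d m s) c phi b 1.
Proof.
  intros Hmu Hgap HK.
  assert (Hm' : forall x, continuous (fun t => m (1 - t)) x) by (intros; auto_cont).
  destruct (trace_step_profile de al be a l ltac:(lra) al_lt_be be_lt_1 step_series
    (fun t => m (1 - t)) h nu h_pos h_lt_al nu_gt_1 Hm'
    ltac:(cbv beta; replace (1 - a) with b by lra; rewrite m_plateau; lra)
    (fun n r Hr => proj2 (proj1 (m_above n r) Hr))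
    (fun n r Hr => proj2 (proj2 (m_above n r) Hr)) mu K Hmu HK) as [s2 Htrace].
  exists s2; intros s Hs phi Hphi.
  destruct (C1fun_reflect phi Hphi) as [Hphi' _].
  pose proof (energy_ge_gap (exp_weight d m s) c phi b b (1 - de) 1 lamD mu
    (continuous_exp_weight d m s m_cont) c_cont Hphi ltac:(lra) ltac:(lra) ltac:(lra) ltac:(lra)
    ltac:(intros; apply exp_weight_nonneg; lra) ltac:(intros; apply Hgap; lra)) as Hend.
  pose proof (energy_exp_weight_ge d m phi s mu b (1 - de) (b ^ (d - 1)) m_cont Hphi ltac:(lra)
    ltac:(lra) ltac:(intros; split; [apply pow_le | apply pow_incr]; lra)) as Hw.
  assert (Hmirror :
    RInt (fun r => exp (2 * s * m r) * (Derive phi r ^ 2 + mu * phi r ^ 2)) b (1 - de) =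
    RInt (fun t => exp (2 * s * m (1 - t)) *
                   (Derive (fun t => phi (1 - t)) t ^ 2 + mu * phi (1 - t) ^ 2)) de a).
  { replace b with (1 - a) at 1 by lra; now apply RInt_exp_energy_reflect. }
  rewrite Hmirror in Hw.
  pose proof (Htrace s Hs _ Hphi') as Htr; cbv beta in Htr; replace (1 - a) with b in Htr by lra.
  pose proof (pow_le b (d - 1) ltac:(lra)).
  apply Rmult_le_compat_l with (r := b ^ (d - 1)) in Htr; [|assumption].
  lra.
Qed.

(* Mass on the ends costs at least [lambda^D + mu]; on [a, b] the Dirichlet
   inequality holds up to the penalty [C (phi a^2 + phi b^2)], which the trace
   terms of the two ends pay for once [K >= C / de^(d-1)]. *)
Theorem lambda_s_lower eta : 0 < eta -> exists s0, forall s, s0 <= s ->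
  lamD - eta <= lambda_s d m c s.
Proof.
  intros Heta.
  assert (Hc_ab : forall x, a < x < b -> 0 <= c x) by (intros; apply Rlt_le, c_pos; lra).
  destruct (uniform_gap c lamD a b c_cont ltac:(lra) ltac:(lra) c_gap) as [mu [Hmu Hgap]].
  destruct (energy_ge_boundary_penalty (rad_weight d) c a b lamD (continuous_rad_weight d)
    c_cont a_lt_b ltac:(intros; apply pow_le; lra) Hc_ab
    (lambda_D_nonneg d c a b a_pos a_lt_b c_cont Hc_ab)
    (lambda_D_rayleigh d c a b a_pos a_lt_b c_cont Hc_ab) eta Heta) as [C [HC Hpenalty]].
  assert (Hde_pow : 0 < de ^ (d - 1)) by (apply pow_lt; lra).
  assert (Hb_pow : de ^ (d - 1) <= b ^ (d - 1)) by (apply pow_incr; lra).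
  set (K := C / de ^ (d - 1) + 1).
  assert (HK : 0 < K) by (unfold K; pose proof (Rdiv_le_0_compat C _ HC Hde_pow); lra).
  assert (HKC : C <= de ^ (d - 1) * K) by (unfold K; field_simplify; lra).
  destruct (left_end_bound mu K Hmu ltac:(intros; apply Hgap; lra) HK) as [s1 Hleft].
  destruct (right_end_bound mu K Hmu ltac:(intros; apply Hgap; lra) HK) as [s2 Hright].
  exists (Rmax s1 s2); intros s Hs.
  apply (lambda_s_ge d m c s m_cont c_cont).
  intros phi Hphi Hmass.
  pose proof (continuous_exp_weight d m s m_cont) as HW.
  pose proof (Hleft s ltac:(pose proof (Rmax_l s1 s2); lra) phi Hphi) as HL.
  pose proof (Hright s ltac:(pose proof (Rmax_r s1 s2); lra) phi Hphi) as HR.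
  pose proof (Hpenalty phi Hphi) as HM.
  rewrite <- (mass_exp_weight_plateau d m a b a_lt_b m_plateau s),
    <- (energy_exp_weight_plateau d m c a b a_lt_b m_plateau s) in HM.
  rewrite (mass_split3 _ _ a b HW Hphi) in Hmass; rewrite (energy_split3 _ _ _ a b HW c_cont Hphi).
  assert (0 <= mass (exp_weight d m s) phi 0 a)
    by (apply mass_nonneg; auto; [lra | intros; apply exp_weight_nonneg; lra]).
  assert (0 <= mass (exp_weight d m s) phi a b)
    by (apply mass_nonneg; auto; [lra | intros; apply exp_weight_nonneg; lra]).
  assert (0 <= mass (exp_weight d m s) phi b 1)
    by (apply mass_nonneg; auto; [lra | intros; apply exp_weight_nonneg; lra]).
  pose proof (pow2_ge_0 (phi a)); pose proof (pow2_ge_0 (phi b)).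
  assert (C * phi a ^ 2 <= de ^ (d - 1) * K * phi a ^ 2) by (apply Rmult_le_compat_r; lra).
  assert (C * phi b ^ 2 <= b ^ (d - 1) * K * phi b ^ 2) by (apply Rmult_le_compat_r; nra).
  nra.
Qed.

End LowerBound.

Theorem proposition3p2 (d : nat) (a b : R) (m c : R -> R) :
  (1 <= d)%nat ->
  0 < a -> a < b -> b < 1 -> a + b = 1 ->
  C1fun m ->
  (exists x y, 0 <= x <= 1 /\ 0 <= y <= 1 /\ m x <> m y) ->
  (forall x, continuous c x) ->
  H1 m a b -> H2 d c a b -> in_SD m a b ->
  is_lim (lambda_s d m c) p_infty (lambda_D d c a b).
Proof.
  intros _ Ha Hab Hb Hab1 Hm1 _ Hc [_ Hplateau] [Hcpos Hgap] HSD.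
  destruct HSD as [de [h [al [be [nu [l [Hde [Hh [Hhal [Halbe [Hbe [Hnu
    [Hseries [_ [_ Habove]]]]]]]]]]]]]]].
  pose proof (C1fun_continuous _ Hm1) as Hm.
  apply is_lim_spec; intros eps; pose proof (cond_pos eps) as Heps.
  destruct (lambda_s_lower d m c a b de h al be nu l Ha Hab Hb Hab1 Hm Hc Hplateau Hcpos Hgap
    (proj1 Hde) (proj2 Hde) Hh Hhal Halbe Hbe Hnu Hseries Habove (eps / 2)) as [s0 Hlow]; [lra|].
  exists s0; intros s Hs; simpl.
  pose proof (Hlow s (Rlt_le _ _ Hs)).
  pose proof (lambda_s_upper d m c a b Ha Hab Hb Hm Hc Hplateau Hcpos (eps / 2) s ltac:(lra)).
  apply Rabs_def1; lra.
Qed.
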